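(* Let $f:(a,b)\to\mathbb R$, $-\infty\le a<0<b\le\infty$, be continuous, strictly increasing, with $f((a,b))=\mathbb R$. Let $\vec X^m\in\underline V^h_{\partial_0}$ satisfy assumptions $(\mathfrak A)$ and $(\mathfrak B)^h$, let $\Delta t_m>0$, and (for the second scheme) let $\kappa^m\in V^h$ be given with $(\kappa^m-\mathfrak K^m(\kappa^m))(q_j)\in(a,b)$ for all $j$. Consider the problem: find $(\delta\vec X^{m+1},\kappa^{m+1})\in\underline V^h_\partial\times V^h$ with $(\kappa^{m+1}-\mathfrak K^m(\kappa^{m+1}))(q_j)\in(a,b)$ for all $j$ such that, with $\vec X^{m+1}=\vec X^m+\delta\vec X^{m+1}$, $$\Big(\tfrac{\vec X^{m+1}-\vec X^m}{\Delta t_m},\chi\,\vec\nu^m|\vec X^m_\rho|\Big)^h=\Big(f(\kappa^{m+1}-\mathfrak K^m(\kappa^{m+1})),\chi|\vec X^m_\rho|\Big)^h-\theta\,G^m\,\big(\chi,|\vec X^m_\rho|\big)^h\quad\forall\chi\in V^h,$$ $$\Big(\kappa^{m+1}\vec\nu^m,\vec\eta\,|\vec X^m_\rho|\Big)^h+\Big(\vec X^{m+1}_\rho,\vec\eta_\rho|\vec X^m_\rho|^{-1}\Big)=-\sum_{i=1}^2\sum_{p\in\partial_iI}\widehat\varrho^{(p)}\,\vec\eta(p)\cdot\vec e_{3-i}\quad\forall\vec\eta\in\underline V^h_\partial,$$ where either $\theta=0$ (scheme $(\mathcal A^f_m)^h$) or $\theta=1$ (scheme $(\mathcal A^{f,V}_m)^h$),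 and $G^m=\frac{(\vec X^m\cdot\vec e_1,\,f(\kappa^m-\mathfrak K^m(\kappa^m))|\vec X^m_\rho|)^h}{(\vec X^m\cdot\vec e_1,|\vec X^m_\rho|)}$. Then, for either choice of $\theta$: if $a=-\infty$ and $b=\infty$, a solution exists; and for general $a<b$ there exists at most one solution.
   Context: Setup. $\vec e_1=(1,0)^T$, $\vec e_2=(0,1)^T$; ''$\cdot$'' is the Euclidean inner product. $I$ is either the periodic interval $\mathbb R/\mathbb Z$ (with $\partial I=\emptyset$) or $I=(0,1)$ (with $\partial I=\{0,1\}$). $\partial I=\partial_DI\cup\partial_0I\cup\partial_1I\cup\partial_2I$ is a given disjoint partition, and $\widehat\varrho^{(p)}\in\mathbb R$, $p\in\{0,1\}$, are given constants with $|\widehat\varrho^{(p)}|\le1$. Let $J\ge3$, $h=1/J$, $q_j=jh$ ($j=0,\dots,J$; $q_0=q_J$ identified in the periodic case). $V^h$ is the space of continuous functions on $\overline I$ (periodic if $I=\mathbb R/\mathbb Z$) that are affine on each $[q_{j-1},q_j]$; $\underline V^h=[V^h]^2$; $\underline V^h_{\partial_0}=\{\vec\eta\in\underline V^h:\vec\eta(\rho)\cdot\vec e_1=0\ \forall\rho\in\partial_0I\}$; $\underline V^h_\partial=\{\vec\eta\in\underline V^h_{\partial_0}:\vec\eta(\rho)\cdot\vec e_i=0\ \forall\rho\in\partial_iI,\ i=1,2;\ \vec\eta(\rho)=\vec0\ \forall\rho\in\partial_DI\}$. $(\cdot,\cdot)$ is the $L^2(I)$ inner product (with dot product for vector functions),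 and for piecewise continuous $f,g$ the mass-lumped product is $(f,g)^h=\tfrac h2\sum_{j=1}^J[(fg)(q_j^-)+(fg)(q_{j-1}^+)]$; in particular for $\psi\in V^h$, $f(\psi)$ enters $(\cdot,\cdot)^h$ only through its nodal values $f(\psi(q_j))$. For $\vec X^m\in\underline V^h_{\partial_0}$ with $|\vec X^m_\rho|>0$ a.e., set $\vec\nu^m=-[\vec X^m_\rho]^\perp/|\vec X^m_\rho|$, where $(a,b)^\perp=(b,-a)$, and let $\vec\omega^m\in\underline V^h$ be defined by $(\vec\omega^m,\vec\varphi|\vec X^m_\rho|)^h=(\vec\nu^m,\vec\varphi|\vec X^m_\rho|)$ for all $\vec\varphi\in\underline V^h$. Assumption $(\mathfrak A)$: $|\vec X^m_\rho|>0$ a.e. on $I$ and $\vec X^m(\rho)\cdot\vec e_1>0$ for all $\rho\in\overline I\setminus\partial_0I$. Assumption $(\mathfrak B)^h$: the set $\{(\vec\nu^m,\chi|\vec X^m_\rho|)^h:\chi\in V^h\}\subset\mathbb R^2$ spans $\mathbb R^2$. For $\kappa\in V^h$, $\mathfrak K^m(\kappa)\in V^h$ is defined nodally by $\mathfrak K^m(\kappa)(q_j)=\frac{\vec\omega^m(q_j)\cdot\vec e_1}{\vec X^m(q_j)\cdot\vec e_1}$ if $q_j\in\overline I\setminus\partial_0I$ and $\mathfrak K^m(\kappa)(q_j)=-\kappa(q_j)$ if $q_j\in\partial_0I$. *)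

From Stdlib Require Import Reals Lra List.
Open Scope R_scope.

Definition vec := (R * R)%type.
Definition vdot (u v : vec) : R := fst u * fst v + snd u * snd v.
Definition vadd (u v : vec) : vec := (fst u + fst v, snd u + snd v).
Definition vsub (u v : vec) : vec := (fst u - fst v, snd u - snd v).
Definition vscal (c : R) (u : vec) : vec := (c * fst u, c * snd u).
Definition vperp (u : vec) : vec := (snd u, - fst u).
Definition vnorm (u : vec) : R := sqrt (vdot u u).
Definition e1 : vec := (1, 0).
Definition e2 : vec := (0, 1).

(* h = 1/J, q_j = j h ; element j (1 <= j <= J) is [q_(j-1), q_j]. *)
Definition hh (J : nat) : R := / INR J.
Definition node (J j : nat) : R := INR j * hh J.

Fixpoint sum_el (J : nat) (F : nat -> R) : R :=
  match J with O => 0 | S k => sum_el k F + F (S k) end.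

(* Functions of V^h are represented by their nodal values j = 0..J
   (values at indices > J are irrelevant).  In the periodic case
   (per = true) q_0 = q_J are identified. *)
Definition inVh (per : bool) (J : nat) (v : nat -> R) : Prop :=
  per = true -> v J = v O.
Definition inVVh (per : bool) (J : nat) (v : nat -> vec) : Prop :=
  per = true -> v J = v O.

(* piecewise (possibly discontinuous at nodes) functions: element index j and
   point rho in [q_(j-1), q_j] *)
Definition pwf := nat -> R -> R.
Definition vpwf := nat -> R -> vec.

Definition p1 (J : nat) (v : nat -> R) : pwf :=
  fun j x => v (j - 1)%nat + (v j - v (j - 1)%nat) * (x - node J (j - 1)) / hh J.
Definition vp1 (J : nat) (V : nat -> vec) : vpwf :=
  fun j x => vadd (V (j - 1)%nat)
                  (vscal ((x - node J (j - 1)) / hh J) (vsub (V j) (V (j - 1)%nat))).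

(* mass-lumped product (f,g)^h = h/2 sum_j [(fg)(q_j^-) + (fg)(q_(j-1)^+)] *)
Definition lump (J : nat) (F G : pwf) : R :=
  hh J / 2 * sum_el J (fun j => F j (node J j) * G j (node J j)
                               + F j (node J (j - 1)) * G j (node J (j - 1))).
Definition vlump (J : nat) (F G : vpwf) : R :=
  hh J / 2 * sum_el J (fun j => vdot (F j (node J j)) (G j (node J j))
                               + vdot (F j (node J (j - 1))) (G j (node J (j - 1)))).

(* L^2(I) product, for integrands that are affine on every element
   (all L^2 products occurring below are of this kind); for such integrands
   the integral over each element equals h * (mean of endpoint values),
   which is what is computed here (exactly). *)
Definition l2aff (J : nat) (F G : pwf) : R :=
  sum_el J (fun j => hh J * (F j (node J (j - 1)) * G j (node J (j - 1))
                             + F j (node J j) * G j (node J j)) / 2).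
Definition vl2aff (J : nat) (F G : vpwf) : R :=
  sum_el J (fun j => hh J * (vdot (F j (node J (j - 1))) (G j (node J (j - 1)))
                             + vdot (F j (node J j)) (G j (node J j))) / 2).

Definition vdrho (J : nat) (X : nat -> vec) (j : nat) : vec :=
  vscal (/ hh J) (vsub (X j) (X (j - 1)%nat)).
Definition lenrho (J : nat) (X : nat -> vec) (j : nat) : R := vnorm (vdrho J X j).
Definition nu (J : nat) (X : nat -> vec) (j : nat) : vec :=
  vscal (- / lenrho J X j) (vperp (vdrho J X j)).

(* boundary point p : bool, false <-> rho = 0 (node 0), true <-> rho = 1 (node J) *)
Inductive bctype := BD | B0 | B1 | B2.
Definition bc_eqb (x y : bctype) : bool :=
  match x, y with
  | BD, BD | B0, B0 | B1, B1 | B2, B2 => true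
  | _, _ => false end.
Definition bnode (J : nat) (p : bool) : nat := if p then J else O.
Definition in_bd (per : bool) (J : nat) (bc : bool -> bctype) (k : bctype) (j : nat) : bool :=
  negb per && ((bc_eqb (bc false) k && Nat.eqb j O) || (bc_eqb (bc true) k && Nat.eqb j J)).

Definition inVVh_d0 (per : bool) (J : nat) (bc : bool -> bctype) (V : nat -> vec) : Prop :=
  inVVh per J V /\ (forall j, in_bd per J bc B0 j = true -> vdot (V j) e1 = 0).
Definition inVVh_d (per : bool) (J : nat) (bc : bool -> bctype) (V : nat -> vec) : Prop :=
  inVVh_d0 per J bc V /\
  (forall j, in_bd per J bc B1 j = true -> vdot (V j) e1 = 0) /\
  (forall j, in_bd per J bc B2 j = true -> vdot (V j) e2 = 0) /\
  (forall j, in_bd per J bc BD j = true -> V j = (0, 0)).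

Definition bdry_rhs (per : bool) (J : nat) (bc : bool -> bctype) (rho : bool -> R) (eta : nat -> vec) : R :=
  let term p := match bc p with
                | B1 => rho p * vdot (eta (bnode J p)) e2
                | B2 => rho p * vdot (eta (bnode J p)) e1
                | _ => 0 end in
  if per then 0 else - (term false + term true).

Definition assumpA (per : bool) (J : nat) (bc : bool -> bctype) (X : nat -> vec) : Prop :=
  (forall j, (1 <= j <= J)%nat -> 0 < lenrho J X j) /\
  (forall j, (j <= J)%nat -> in_bd per J bc B0 j = false -> 0 < vdot (X j) e1).

Definition Bvec (J : nat) (X : nat -> vec) (chi : nat -> R) : vec :=
  (lump J (fun j _ => fst (nu J X j)) (fun j x => p1 J chi j x * lenrho J X j),
   lump J (fun j _ => snd (nu J X j)) (fun j x => p1 J chi j x * lenrho J X j)).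

(* the set {Bvec chi : chi in V^h} spans R^2 *)
Definition assumpB (per : bool) (J : nat) (X : nat -> vec) : Prop :=
  forall v : vec, exists l : list (R * (nat -> R)),
    Forall (fun pc => inVh per J (snd pc)) l /\
    v = fold_right (fun pc acc => vadd (vscal (fst pc) (Bvec J X (snd pc))) acc) (0, 0) l.

Definition omega_spec (per : bool) (J : nat) (X om : nat -> vec) : Prop :=
  inVVh per J om /\
  forall phi, inVVh per J phi ->
    vlump J (vp1 J om) (fun j x => vscal (lenrho J X j) (vp1 J phi j x))
    = vl2aff J (fun j _ => nu J X j) (fun j x => vscal (lenrho J X j) (vp1 J phi j x)).

Definition Kop (per : bool) (J : nat) (bc : bool -> bctype) (X om : nat -> vec) (kappa : nat -> R) (j : nat) : R :=
  if in_bd per J bc B0 j then - kappa j else vdot (om j) e1 / vdot (X j) e1.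

(* ---------- the interval (a,b), a,b extended reals (None = -oo / +oo) ---------- *)
Definition inab (a b : option R) (x : R) : Prop :=
  (match a with None => True | Some a' => a' < x end) /\
  (match b with None => True | Some b' => x < b' end).

Definition Gm (per : bool) (J : nat) (bc : bool -> bctype) (f : R -> R) (X om : nat -> vec) (km : nat -> R) : R :=
  lump J (p1 J (fun j => vdot (X j) e1))
         (fun j x => p1 J (fun i => f (km i - Kop per J bc X om km i)) j x * lenrho J X j)
  / l2aff J (p1 J (fun j => vdot (X j) e1)) (fun j _ => lenrho J X j).

Definition is_solution (per : bool) (J : nat) (bc : bool -> bctype) (rho : bool -> R) (a b : option R) (f : R -> R)
    (theta : R) (X om : nat -> vec) (km : nat -> R) (dt : R)
    (dX : nat -> vec) (k : nat -> R) : Prop :=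
  let Xn := fun j => vadd (X j) (dX j) in
  inVVh_d per J bc dX /\ inVh per J k /\
  (forall j, (j <= J)%nat -> inab a b (k j - Kop per J bc X om k j)) /\
  (forall chi, inVh per J chi ->
     vlump J (vp1 J (fun j => vscal (/ dt) (vsub (Xn j) (X j))))
             (fun j x => vscal (p1 J chi j x * lenrho J X j) (nu J X j))
     = lump J (p1 J (fun i => f (k i - Kop per J bc X om k i)))
              (fun j x => p1 J chi j x * lenrho J X j)
       - theta * Gm per J bc f X om km * lump J (p1 J chi) (fun j _ => lenrho J X j)) /\
  (forall eta, inVVh_d per J bc eta ->
     vlump J (fun j x => vscal (p1 J k j x) (nu J X j))
             (fun j x => vscal (lenrho J X j) (vp1 J eta j x))
     + vl2aff J (fun j _ => vdrho J Xn j)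
                (fun j _ => vscal (/ lenrho J X j) (vdrho J eta j))
     = bdry_rhs per J bc rho eta).

From Pilot Require Import Defs.
From Stdlib Require Import Reals Lra Lia List Bool ClassicalEpsilon.
From Coquelicot Require Import Coquelicot.
From mathcomp Require all_boot all_order all_algebra all_classical all_reals all_analysis.
From mathcomp Require Rstruct Rstruct_topology.

(* Uniqueness: for two solutions, test the difference of the first equations
   with [k1 - k2] and the difference of the second ones with [dX1 - dX2]. The
   curvature coupling cancels and what remains is
     dt sum_i M_i (k1 - k2)_i (f (k1 - K(k1)) - f (k2 - K(k2)))_i
       + ((dX1 - dX2)_rho, (dX1 - dX2)_rho |X_rho|^-1) = 0,
   with lumped masses [M_i > 0]. Both terms are nonnegative because [f] and,
   nodewise, [k |-> k - K^m(k)] are increasing; so [k1 = k2], [dX1 - dX2] is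
   constant, and (B)^h forces the constant to vanish.

   Existence, for [f] a bijection of R: solving the first equation at each node
   gives [k_i = phi_i (nu_i . dX_i)] with [phi_i] continuous, nondecreasing and
   onto, and the second equation becomes the Euler-Lagrange equation of the
   convex energy
     1/2 (X_rho, X_rho |X^m_rho|^-1) - (boundary term) + sum_i Phi_i (nu_i . dX_i),
   where [Phi_i' = phi_i]. The Dirichlet part controls the variation of [dX] and
   (B)^h with the linear growth of [Phi_i] controls its mean, so the energy is
   coercive and attains its minimum on a compact box. *)

Open Scope R_scope.
Set Bullet Behavior "Strict Subproofs".

(** * Finite sums *)

Fixpoint nsum (n : nat) (F : nat -> R) : R :=
  match n with O => 0 | S k => nsum k F + F k end.

Lemma nsum_ext n F G : (forall i, (i < n)%nat -> F i = G i) -> nsum n F = nsum n G.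
Proof.
  induction n; intros H; simpl; auto.
  rewrite IHn by (intros; apply H; lia). rewrite (H n) by lia. auto.
Qed.

Lemma nsum_plus n F G : nsum n (fun i => F i + G i) = nsum n F + nsum n G.
Proof. induction n; simpl; [ring|rewrite IHn; ring]. Qed.
Lemma nsum_minus n F G : nsum n (fun i => F i - G i) = nsum n F - nsum n G.
Proof. induction n; simpl; [ring|rewrite IHn; ring]. Qed.
Lemma nsum_scal n c F : nsum n (fun i => c * F i) = c * nsum n F.
Proof. induction n; simpl; [ring|rewrite IHn; ring]. Qed.

Lemma nsum_shift n F : nsum (S n) F = F O + nsum n (fun i => F (S i)).
Proof. induction n; simpl in *; [ring|]. rewrite IHn. ring. Qed.

Lemma nsum_le n F G : (forall i, (i < n)%nat -> F i <= G i) -> nsum n F <= nsum n G.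
Proof.
  induction n; intros H; simpl; [lra|].
  assert (F n <= G n) by (apply H; lia).
  assert (nsum n F <= nsum n G) by (apply IHn; intros; apply H; lia). lra.
Qed.

Lemma nsum_nonneg n F : (forall i, (i < n)%nat -> 0 <= F i) -> 0 <= nsum n F.
Proof.
  induction n; intros H; simpl; [lra|].
  assert (0 <= F n) by (apply H; lia).
  assert (0 <= nsum n F) by (apply IHn; intros; apply H; lia). lra.
Qed.

Lemma nsum_term_le n F i :
  (forall k, (k < n)%nat -> 0 <= F k) -> (i < n)%nat -> F i <= nsum n F.
Proof.
  induction n; intros H Hi; [lia|]. simpl.
  assert (0 <= F n) by (apply H; lia).
  assert (0 <= nsum n F) by (apply nsum_nonneg; intros; apply H; lia).
  destruct (Nat.eq_dec i n); [subst; lra|].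
  assert (F i <= nsum n F) by (apply IHn; [intros; apply H; lia|lia]). lra.
Qed.

Lemma nsum_eq0_nonneg n F :
  (forall i, (i < n)%nat -> 0 <= F i) -> nsum n F = 0 -> forall i, (i < n)%nat -> F i = 0.
Proof.
  intros H0 H i Hi. pose proof (nsum_term_le n F i H0 Hi). pose proof (H0 i Hi). lra.
Qed.

Lemma nsum_abs n F : Rabs (nsum n F) <= nsum n (fun i => Rabs (F i)).
Proof.
  induction n; simpl; [rewrite Rabs_R0; lra|].
  eapply Rle_trans; [apply Rabs_triang|]. lra.
Qed.

Lemma nsum_mul_abs_le n a w :
  Rabs (nsum n (fun i => a i * w i)) <=
  nsum n (fun i => Rabs (a i)) * nsum n (fun i => Rabs (w i)).
Proof.
  eapply Rle_trans; [apply nsum_abs|].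
  rewrite Rmult_comm, <- nsum_scal. apply nsum_le. intros i Hi.
  rewrite Rabs_mult, (Rmult_comm (Rabs (a i))). apply Rmult_le_compat_r; [apply Rabs_pos|].
  apply (nsum_term_le n (fun i => Rabs (w i))); auto. intros; apply Rabs_pos.
Qed.

Lemma sum_el_nsum n F : sum_el n F = nsum n (fun i => F (S i)).
Proof. induction n; simpl; auto. rewrite IHn; auto. Qed.

Lemma sum_el_ext n F G :
  (forall j, (1 <= j <= n)%nat -> F j = G j) -> sum_el n F = sum_el n G.
Proof. intros H. rewrite !sum_el_nsum. apply nsum_ext. intros; apply H; lia. Qed.

Lemma sum_el_plus n F G : sum_el n (fun j => F j + G j) = sum_el n F + sum_el n G.
Proof. rewrite !sum_el_nsum. apply nsum_plus. Qed.
Lemma sum_el_minus n F G : sum_el n (fun j => F j - G j) = sum_el n F - sum_el n G.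
Proof. rewrite !sum_el_nsum. apply nsum_minus. Qed.
Lemma sum_el_scal n c F : sum_el n (fun j => c * F j) = c * sum_el n F.
Proof. rewrite !sum_el_nsum. apply nsum_scal. Qed.

Lemma sum_el_le n F G :
  (forall j, (1 <= j <= n)%nat -> F j <= G j) -> sum_el n F <= sum_el n G.
Proof. intros H. rewrite !sum_el_nsum. apply nsum_le. intros; apply H; lia. Qed.

Lemma sum_el_nonneg n F : (forall j, (1 <= j <= n)%nat -> 0 <= F j) -> 0 <= sum_el n F.
Proof. intros H. rewrite sum_el_nsum. apply nsum_nonneg. intros; apply H; lia. Qed.

Lemma sum_el_eq0_nonneg n F :
  (forall j, (1 <= j <= n)%nat -> 0 <= F j) -> sum_el n F = 0 ->
  forall j, (1 <= j <= n)%nat -> F j = 0.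
Proof.
  intros H0 H j Hj. rewrite sum_el_nsum in H. replace j with (S (j - 1)) by lia.
  apply (nsum_eq0_nonneg n (fun i => F (S i))); auto; [intros; apply H0|]; lia.
Qed.

Lemma sum_el_le_prefix n m F :
  (m <= n)%nat -> (forall j, (1 <= j <= n)%nat -> 0 <= F j) -> sum_el m F <= sum_el n F.
Proof.
  induction n; intros Hm H; [replace m with O by lia; simpl; lra|].
  destruct (Nat.eq_dec m (S n)); [subst; lra|]. simpl.
  assert (0 <= F (S n)) by (apply H; lia).
  assert (sum_el m F <= sum_el n F) by (apply IHn; [lia|intros; apply H; lia]). lra.
Qed.

(** * Lumped products at the free nodes *)

(* [gather J c i] collects the weights of the (at most two) elements containing
   node [i]; [fold_periodic] then identifies the nodes [0] and [J] in the
   periodic case, leaving [nfree per J] independent nodal values. *)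
Definition gather (J : nat) (c : nat -> R) (i : nat) : R :=
  (if (1 <=? i)%nat then c i else 0) + (if (i <? J)%nat then c (S i) else 0).
Definition nfree (per : bool) (J : nat) : nat := if per then J else S J.
Definition fold_periodic (per : bool) (J : nat) (C : nat -> R) (i : nat) : R :=
  if per && (i =? 0)%nat then C O + C J else C i.

Lemma nfree_le per J i : (i < nfree per J)%nat -> (i <= J)%nat.
Proof. unfold nfree. destruct per; lia. Qed.

Lemma sum_el_gather J c q :
  sum_el J (fun j => c j * q j + c j * q (j - 1)%nat) = nsum (S J) (fun i => gather J c i * q i).
Proof.
  rewrite sum_el_plus, !sum_el_nsum.
  unfold gather. rewrite (nsum_ext (S J) _ (fun i => (if (1 <=? i)%nat then c i * q i else 0)
                 + (if (i <? J)%nat then c (S i) * q i else 0))).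
  2:{ intros i _. destruct (1 <=? i)%nat, (i <? J)%nat; ring. }
  rewrite nsum_plus. f_equal.
  - rewrite nsum_shift. simpl. rewrite Rplus_0_l. apply nsum_ext; intros; auto.
  - cbn [nsum]. rewrite Nat.ltb_irrefl, Rplus_0_r. apply nsum_ext. intros i Hi.
    replace (i <? J)%nat with true by (symmetry; apply Nat.ltb_lt; lia).
    replace (S i - 1)%nat with i by lia. auto.
Qed.

Lemma sum_el_nodal per J c q : (1 <= J)%nat -> (per = true -> q J = q O) ->
  sum_el J (fun j => c j * q j + c j * q (j - 1)%nat) =
  nsum (nfree per J) (fun i => fold_periodic per J (gather J c) i * q i).
Proof.
  intros HJ Hq. rewrite sum_el_gather. unfold nfree, fold_periodic. destruct per; [|auto].
  simpl. rewrite Hq by auto. destruct J; [lia|].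
  rewrite !nsum_shift. cbn [nsum]. simpl (0 =? 0)%nat. simpl (if true then _ else _).
  rewrite (nsum_ext J (fun i => (if (S i =? 0)%nat then _ else _) * q (S i))
    (fun i => gather (S J) c (S i) * q (S i))) by (intros; simpl; auto). ring.
Qed.

Lemma hh_pos J : (1 <= J)%nat -> 0 < hh J.
Proof. intros. unfold hh. apply Rinv_0_lt_compat, lt_0_INR. lia. Qed.

Lemma node_step J j : (1 <= J)%nat -> (1 <= j)%nat -> (node J j - node J (j - 1)) / hh J = 1.
Proof.
  intros HJ Hj. pose proof (hh_pos J HJ). destruct j as [|k]; [lia|].
  unfold node. replace (S k - 1)%nat with k by lia. rewrite S_INR. field. lra.
Qed.

Lemma p1_right J v j : (1 <= J)%nat -> (1 <= j)%nat -> p1 J v j (node J j) = v j.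
Proof.
  intros HJ Hj. pose proof (node_step J j HJ Hj). pose proof (hh_pos J HJ). unfold p1.
  replace ((v j - v (j - 1)%nat) * (node J j - node J (j - 1)) / hh J)
    with ((v j - v (j - 1)%nat) * ((node J j - node J (j - 1)) / hh J)) by (field; lra).
  rewrite H. ring.
Qed.

Lemma p1_left J v j : (1 <= J)%nat -> p1 J v j (node J (j - 1)) = v (j - 1)%nat.
Proof.
  intros HJ. pose proof (hh_pos J HJ). unfold p1.
  replace (node J (j - 1) - node J (j - 1)) with 0 by ring. field. lra.
Qed.

Lemma vp1_right J V j : (1 <= J)%nat -> (1 <= j)%nat -> vp1 J V j (node J j) = V j.
Proof.
  intros HJ Hj. unfold vp1. rewrite node_step by auto. unfold vadd, vscal, vsub.
  destruct (V j), (V (j - 1)%nat); simpl. f_equal; ring.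
Qed.

Lemma vp1_left J V j : (1 <= J)%nat -> vp1 J V j (node J (j - 1)) = V (j - 1)%nat.
Proof.
  intros HJ. pose proof (hh_pos J HJ). unfold vp1.
  replace ((node J (j - 1) - node J (j - 1)) / hh J) with 0 by (field; lra).
  unfold vadd, vscal, vsub. destruct (V j), (V (j - 1)%nat); simpl. f_equal; ring.
Qed.

Section Nodal.
Variables (per : bool) (J : nat) (X : nat -> vec).
Hypothesis HJ : (1 <= J)%nat.

Let wmass j := hh J / 2 * lenrho J X j.
Let wnormal1 j := hh J / 2 * lenrho J X j * fst (nu J X j).
Let wnormal2 j := hh J / 2 * lenrho J X j * snd (nu J X j).

(* [(1, chi |X_rho|)^h] and [(nu, chi |X_rho|)^h] for the hat function [chi] of
   the free node [i]. *)
Definition lumped_mass (i : nat) : R := fold_periodic per J (gather J wmass) i.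
Definition lumped_normal (i : nat) : vec :=
  (fold_periodic per J (gather J wnormal1) i, fold_periodic per J (gather J wnormal2) i).

Lemma lump_velocity_nodal V chi : inVVh per J V -> inVh per J chi ->
  vlump J (vp1 J V) (fun j x => vscal (p1 J chi j x * lenrho J X j) (nu J X j))
  = nsum (nfree per J) (fun i => chi i * vdot (lumped_normal i) (V i)).
Proof.
  intros HV Hc. unfold vlump. rewrite <- sum_el_scal.
  rewrite (sum_el_ext J _
     (fun j => (wnormal1 j * (chi j * fst (V j)) + wnormal1 j * (chi (j-1)%nat * fst (V (j-1)%nat)))
     + (wnormal2 j * (chi j * snd (V j)) + wnormal2 j * (chi (j-1)%nat * snd (V (j-1)%nat))))).
  - rewrite sum_el_plus, !(sum_el_nodal per) by (auto; intros Hp; rewrite (Hc Hp), (HV Hp); auto).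
    rewrite <- nsum_plus. apply nsum_ext. intros i _. unfold vdot, lumped_normal. simpl. ring.
  - intros j Hj. rewrite !vp1_right, !vp1_left, !p1_right, !p1_left by lia.
    unfold vdot, vscal, wnormal1, wnormal2. simpl. ring.
Qed.

Lemma lump_curvature_nodal k eta : inVh per J k -> inVVh per J eta ->
  vlump J (fun j x => vscal (p1 J k j x) (nu J X j))
          (fun j x => vscal (lenrho J X j) (vp1 J eta j x))
  = nsum (nfree per J) (fun i => k i * vdot (lumped_normal i) (eta i)).
Proof.
  intros Hk HV. unfold vlump. rewrite <- sum_el_scal.
  rewrite (sum_el_ext J _
     (fun j => (wnormal1 j * (k j * fst (eta j)) + wnormal1 j * (k (j-1)%nat * fst (eta (j-1)%nat)))
     + (wnormal2 j * (k j * snd (eta j)) + wnormal2 j * (k (j-1)%nat * snd (eta (j-1)%nat))))).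
  - rewrite sum_el_plus, !(sum_el_nodal per) by (auto; intros Hp; rewrite (Hk Hp), (HV Hp); auto).
    rewrite <- nsum_plus. apply nsum_ext. intros i _. unfold vdot, lumped_normal. simpl. ring.
  - intros j Hj. rewrite !vp1_right, !vp1_left, !p1_right, !p1_left by lia.
    unfold vdot, vscal, wnormal1, wnormal2. simpl. ring.
Qed.

Lemma lump_p1_nodal F chi : inVh per J F -> inVh per J chi ->
  lump J (p1 J F) (fun j x => p1 J chi j x * lenrho J X j)
  = nsum (nfree per J) (fun i => lumped_mass i * (chi i * F i)).
Proof.
  intros HF Hc. unfold lump. rewrite <- sum_el_scal.
  rewrite (sum_el_ext J _
    (fun j => wmass j * (chi j * F j) + wmass j * (chi (j-1)%nat * F (j-1)%nat))).
  - rewrite (sum_el_nodal per) by (auto; intros Hp; rewrite (Hc Hp), (HF Hp); auto).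
    apply nsum_ext. intros i _. unfold lumped_mass. ring.
  - intros j Hj. rewrite !p1_right, !p1_left by lia. unfold wmass. ring.
Qed.

Lemma lump_mass_nodal chi : inVh per J chi ->
  lump J (p1 J chi) (fun j _ => lenrho J X j) = nsum (nfree per J) (fun i => lumped_mass i * chi i).
Proof.
  intros Hc. unfold lump. rewrite <- sum_el_scal.
  rewrite (sum_el_ext J _ (fun j => wmass j * chi j + wmass j * chi (j-1)%nat)).
  - rewrite (sum_el_nodal per) by (auto; intros Hp; rewrite (Hc Hp); auto).
    apply nsum_ext. intros i _. unfold lumped_mass. ring.
  - intros j Hj. rewrite !p1_right, !p1_left by lia. unfold wmass. ring.
Qed.

Let lump_const_p1 (g : nat -> R) chi : inVh per J chi ->
  lump J (fun j _ => g j) (fun j x => p1 J chi j x * lenrho J X j)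
  = nsum (nfree per J)
      (fun i => fold_periodic per J (gather J (fun j => hh J / 2 * lenrho J X j * g j)) i * chi i).
Proof.
  intros Hc. unfold lump. rewrite <- sum_el_scal.
  rewrite (sum_el_ext J _ (fun j => hh J / 2 * lenrho J X j * g j * chi j
                                   + hh J / 2 * lenrho J X j * g j * chi (j - 1)%nat)).
  - apply (sum_el_nodal per); auto.
  - intros j Hj. rewrite !p1_right, !p1_left by lia. ring.
Qed.

Lemma vdot_Bvec_nodal c chi : inVh per J chi ->
  vdot c (Bvec J X chi) = nsum (nfree per J) (fun i => chi i * vdot (lumped_normal i) c).
Proof.
  intros Hc. unfold Bvec, vdot at 1; simpl. rewrite !lump_const_p1 by auto.
  rewrite <- !nsum_scal, <- nsum_plus. apply nsum_ext. intros i _.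
  unfold vdot, lumped_normal, wnormal1, wnormal2. simpl. ring.
Qed.

Lemma lumped_mass_pos : (forall j, (1 <= j <= J)%nat -> 0 < lenrho J X j) ->
  forall i, (i < nfree per J)%nat -> 0 < lumped_mass i.
Proof.
  intros Hl i Hi. pose proof (hh_pos J HJ).
  assert (Hc : forall j, (1 <= j <= J)%nat -> 0 < wmass j).
  { intros j Hj. unfold wmass. pose proof (Hl j Hj). apply Rmult_lt_0_compat; lra. }
  assert (Hw : forall k, (k <= J)%nat -> 0 < gather J wmass k).
  { intros k Hk. unfold gather.
    destruct (1 <=? k)%nat eqn:E1; destruct (k <? J)%nat eqn:E2.
    - apply Nat.leb_le in E1. apply Nat.ltb_lt in E2.
      pose proof (Hc k ltac:(lia)). pose proof (Hc (S k) ltac:(lia)). lra.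
    - apply Nat.leb_le in E1. pose proof (Hc k ltac:(lia)). lra.
    - apply Nat.ltb_lt in E2. pose proof (Hc (S k) ltac:(lia)). lra.
    - apply Nat.leb_gt in E1. apply Nat.ltb_ge in E2. lia. }
  unfold lumped_mass, fold_periodic, nfree in *. destruct per; simpl; [|apply Hw; lia].
  destruct (i =? 0)%nat; [|apply Hw; lia].
  pose proof (Hw O ltac:(lia)). pose proof (Hw J ltac:(lia)). lra.
Qed.

End Nodal.

(** * The stiffness form, the boundary functional and (B)^h *)

Definition vline (Y eta : nat -> vec) (t : R) : nat -> vec :=
  fun j => vadd (Y j) (vscal t (eta j)).

Section Stiffness.
Variables (J : nat) (X : nat -> vec).
Hypothesis HJ : (1 <= J)%nat.

Definition stiff (Z eta : nat -> vec) : R :=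
  vl2aff J (fun j _ => vdrho J Z j) (fun j _ => vscal (/ lenrho J X j) (vdrho J eta j)).

Lemma stiff_el Z eta :
  stiff Z eta =
  sum_el J (fun j => hh J * vdot (vdrho J Z j) (vscal (/ lenrho J X j) (vdrho J eta j))).
Proof. unfold stiff, vl2aff. apply sum_el_ext. intros. field. Qed.

Lemma vdrho_vline Y eta t j :
  vdrho J (vline Y eta t) j = vadd (vdrho J Y j) (vscal t (vdrho J eta j)).
Proof. unfold vdrho, vline, vadd, vscal, vsub. simpl. f_equal; ring. Qed.

Lemma stiff_vline Z eta t :
  stiff (vline Z eta t) (vline Z eta t) = stiff Z Z + 2 * t * stiff Z eta + t * t * stiff eta eta.
Proof.
  rewrite !stiff_el, <- !sum_el_scal, <- !sum_el_plus. apply sum_el_ext. intros j _.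
  rewrite !vdrho_vline. unfold vdot, vadd, vscal. simpl. ring.
Qed.

Lemma stiff_sub Z1 Z2 eta : stiff Z1 eta - stiff Z2 eta = stiff (fun j => vsub (Z1 j) (Z2 j)) eta.
Proof.
  rewrite !stiff_el, <- sum_el_minus. apply sum_el_ext. intros j _.
  unfold vdrho, vdot, vsub, vscal. simpl. ring.
Qed.

Lemma stiff_ext Z Z' eta eta' :
  (forall j, (j <= J)%nat -> Z j = Z' j /\ eta j = eta' j) -> stiff Z eta = stiff Z' eta'.
Proof.
  intros H. rewrite !stiff_el. apply sum_el_ext. intros j Hj.
  destruct (H j) as [H1 H2]; [lia|]. destruct (H (j-1)%nat) as [H3 H4]; [lia|].
  unfold vdrho. rewrite H1, H2, H3, H4. auto.
Qed.

Hypothesis Hlen : forall j, (1 <= j <= J)%nat -> 0 < lenrho J X j.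

Lemma stiff_self_el eta j : (1 <= j <= J)%nat ->
  hh J * vdot (vdrho J eta j) (vscal (/ lenrho J X j) (vdrho J eta j))
  = hh J / lenrho J X j * (fst (vdrho J eta j) ^ 2 + snd (vdrho J eta j) ^ 2).
Proof.
  intros Hj. pose proof (Hlen j Hj). pose proof (hh_pos J HJ).
  unfold vdot, vscal. simpl. field. lra.
Qed.

Lemma stiff_self_el_nonneg eta j : (1 <= j <= J)%nat ->
  0 <= hh J * vdot (vdrho J eta j) (vscal (/ lenrho J X j) (vdrho J eta j)).
Proof.
  intros Hj. rewrite stiff_self_el by auto. pose proof (Hlen j Hj). pose proof (hh_pos J HJ).
  apply Rmult_le_pos; [apply Rlt_le, Rdiv_lt_0_compat; lra | nra].
Qed.

Lemma stiff_self_nonneg eta : 0 <= stiff eta eta.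
Proof. rewrite stiff_el. apply sum_el_nonneg. intros. apply stiff_self_el_nonneg; auto. Qed.

Lemma stiff_self_eq0 eta : stiff eta eta = 0 -> forall j, (j <= J)%nat -> eta j = eta O.
Proof.
  intros H. rewrite stiff_el in H.
  pose proof (sum_el_eq0_nonneg J _ (stiff_self_el_nonneg eta) H) as Hz.
  assert (Hstep : forall j, (1 <= j <= J)%nat -> eta j = eta (j - 1)%nat).
  { intros j Hj. specialize (Hz j Hj). cbv beta in Hz. rewrite stiff_self_el in Hz by auto.
    pose proof (Hlen j Hj). pose proof (hh_pos J HJ).
    assert (0 < hh J / lenrho J X j) by (apply Rdiv_lt_0_compat; lra).
    assert (fst (vdrho J eta j) ^ 2 + snd (vdrho J eta j) ^ 2 = 0)
      by (apply (Rmult_eq_reg_l (hh J / lenrho J X j)); lra).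
    assert (E1 : fst (vdrho J eta j) = 0) by nra. assert (E2 : snd (vdrho J eta j) = 0) by nra.
    unfold vdrho, vscal, vsub in E1, E2. simpl in E1, E2.
    assert (Hi : / hh J <> 0) by (apply Rinv_neq_0_compat; lra).
    destruct (eta j), (eta (j - 1)%nat). simpl in *.
    apply Rmult_integral in E1. apply Rmult_integral in E2.
    f_equal; [destruct E1 | destruct E2]; (contradiction || lra). }
  intros j. induction j; intros Hj; auto.
  rewrite (Hstep (S j)) by lia. replace (S j - 1)%nat with j by lia. apply IHj. lia.
Qed.

End Stiffness.

Lemma bdry_rhs_vline per J bc rho Y eta t :
  bdry_rhs per J bc rho (vline Y eta t) = bdry_rhs per J bc rho Y + t * bdry_rhs per J bc rho eta.
Proof.
  unfold bdry_rhs, vline. destruct per; [ring|].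
  destruct (bc false), (bc true); unfold vdot, vadd, vscal; simpl; ring.
Qed.

Lemma bdry_rhs_ext per J bc rho Y Y' : (forall j, (j <= J)%nat -> Y j = Y' j) ->
  bdry_rhs per J bc rho Y = bdry_rhs per J bc rho Y'.
Proof. intros H. unfold bdry_rhs, bnode. rewrite (H O), (H J) by lia. auto. Qed.

Lemma bdry_term_bound (c : bctype) r v : Rabs r <= 1 ->
  Rabs (match c with Defs.B1 => r * vdot v e2 | B2 => r * vdot v e1 | _ => 0 end)
  <= Rabs (fst v) + Rabs (snd v).
Proof.
  intros Hr. pose proof (Rabs_pos (fst v)). pose proof (Rabs_pos (snd v)). pose proof (Rabs_pos r).
  destruct c; unfold vdot, e1, e2; simpl; try (rewrite Rabs_R0; lra).
  - replace (fst v * 0 + snd v * 1) with (snd v) by ring. rewrite Rabs_mult. nra.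
  - replace (fst v * 1 + snd v * 0) with (fst v) by ring. rewrite Rabs_mult. nra.
Qed.

Lemma bdry_rhs_bound per J bc rho Y : (forall p, Rabs (rho p) <= 1) ->
  Rabs (bdry_rhs per J bc rho Y) <=
  Rabs (fst (Y O)) + Rabs (snd (Y O)) + Rabs (fst (Y J)) + Rabs (snd (Y J)).
Proof.
  intros Hr. unfold bdry_rhs. destruct per.
  { rewrite Rabs_R0. pose proof (Rabs_pos (fst (Y O))). pose proof (Rabs_pos (snd (Y O))).
    pose proof (Rabs_pos (fst (Y J))). pose proof (Rabs_pos (snd (Y J))). lra. }
  rewrite Rabs_Ropp. eapply Rle_trans; [apply Rabs_triang|].
  pose proof (bdry_term_bound (bc false) (rho false) (Y (bnode J false)) (Hr false)).
  pose proof (bdry_term_bound (bc true) (rho true) (Y (bnode J true)) (Hr true)).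
  simpl in *. lra.
Qed.

Section NormalSpan.
Variables (per : bool) (J : nat) (X : nat -> vec).
Hypothesis HJ : (1 <= J)%nat.

Definition normal_seminorm (c : vec) : R :=
  nsum (nfree per J) (fun i => Rabs (vdot (lumped_normal per J X i) c)).

Definition span_combination (l : list (R * (nat -> R))) : vec :=
  fold_right (fun pc acc => vadd (vscal (fst pc) (Bvec J X (snd pc))) acc) (0, 0) l.

Lemma vdot_span_combination_bound l : List.Forall (fun pc => inVh per J (snd pc)) l ->
  exists K, 0 <= K /\ forall c, Rabs (vdot c (span_combination l)) <= K * normal_seminorm c.
Proof.
  induction l as [|[lam chi] l IH]; intros HF.
  - exists 0. split; [lra|]. intros c. unfold vdot; simpl.
    replace (fst c * 0 + snd c * 0) with 0 by ring. rewrite Rabs_R0. lra.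
  - inversion HF as [|? ? Hchi Hl]; subst. destruct (IH Hl) as [K [K0 HK]]. simpl in Hchi.
    set (Kchi := nsum (nfree per J) (fun i => Rabs (chi i))).
    assert (0 <= Kchi) by (apply nsum_nonneg; intros; apply Rabs_pos).
    exists (Rabs lam * Kchi + K). split; [pose proof (Rabs_pos lam); nra|].
    intros c. simpl.
    replace (vdot c (vadd (vscal lam (Bvec J X chi)) (span_combination l)))
      with (lam * vdot c (Bvec J X chi) + vdot c (span_combination l))
      by (unfold vdot, vadd, vscal; simpl; ring).
    eapply Rle_trans; [apply Rabs_triang|]. rewrite Rabs_mult.
    rewrite (vdot_Bvec_nodal per) by auto.
    pose proof (nsum_mul_abs_le (nfree per J) chi (fun i => vdot (lumped_normal per J X i) c))
      as Hprod.
    fold Kchi (normal_seminorm c) in Hprod. pose proof (HK c). pose proof (Rabs_pos lam).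
    assert (Rabs lam * Rabs (nsum (nfree per J) (fun i => chi i * vdot (lumped_normal per J X i) c))
            <= Rabs lam * (Kchi * normal_seminorm c)) by (apply Rmult_le_compat_l; auto).
    nra.
Qed.

Hypothesis HB : assumpB per J X.

Lemma normal_seminorm_coercive :
  exists K, 0 < K /\ forall c : vec, Rabs (fst c) + Rabs (snd c) <= K * normal_seminorm c.
Proof.
  destruct (HB e1) as [l1 [F1 E1]]. destruct (HB e2) as [l2 [F2 E2]].
  destruct (vdot_span_combination_bound l1 F1) as [K1 [K10 HK1]].
  destruct (vdot_span_combination_bound l2 F2) as [K2 [K20 HK2]].
  exists (K1 + K2 + 1). split; [lra|]. intros c.
  assert (0 <= normal_seminorm c) by (apply nsum_nonneg; intros; apply Rabs_pos).
  specialize (HK1 c). specialize (HK2 c).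
  fold (span_combination l1) in E1. fold (span_combination l2) in E2.
  rewrite <- E1 in HK1. rewrite <- E2 in HK2. unfold vdot, e1, e2 in HK1, HK2. simpl in HK1, HK2.
  replace (fst c * 1 + snd c * 0) with (fst c) in HK1 by ring.
  replace (fst c * 0 + snd c * 1) with (snd c) in HK2 by ring. nra.
Qed.

Lemma Bvec_orthogonal_eq0 c :
  (forall chi, inVh per J chi -> vdot c (Bvec J X chi) = 0) -> c = (0, 0).
Proof.
  intros Hc. destruct (HB c) as [l [F E]]. fold (span_combination l) in E.
  assert (vdot c (span_combination l) = 0).
  { clear E. induction l as [|[lam chi] l IH]; simpl; [unfold vdot; simpl; ring|].
    inversion F as [|? ? Hchi Hl]; subst. simpl in Hchi.
    replace (vdot c (vadd (vscal lam (Bvec J X chi)) (span_combination l)))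
      with (lam * vdot c (Bvec J X chi) + vdot c (span_combination l))
      by (unfold vdot, vadd, vscal; simpl; ring).
    rewrite Hc, IH by auto. ring. }
  rewrite <- E in H. unfold vdot in H. destruct c as [c1 c2]. simpl in H. f_equal; nra.
Qed.

End NormalSpan.

(** * Real analysis *)

Lemma continuity_pt_eps_delta g x : continuity_pt g x <->
  forall eps, 0 < eps -> exists d, 0 < d /\ forall y, Rabs (y - x) < d -> Rabs (g y - g x) < eps.
Proof.
  unfold continuity_pt, continue_in, limit1_in, limit_in, D_x, no_cond, R_dist; simpl.
  split.
  - intros H eps He. destruct (H eps He) as [d [d0 Hd]]. exists d. split; auto.
    intros y Hy. destruct (Req_dec x y) as [<-|Hne].
    + replace (g x - g x) with 0 by ring. rewrite Rabs_R0. auto.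
    + apply Hd. auto.
  - intros H eps He. destruct (H eps He) as [d [d0 Hd]]. exists d. split; auto.
    intros y [_ Hy]. apply Hd, Hy.
Qed.

Lemma continuity_pt_sign_eq0 (D : R -> R) :
  continuity_pt D 0 -> (forall t, 0 <= t * D t) -> D 0 = 0.
Proof.
  intros cD H. pose proof (proj1 (continuity_pt_eps_delta D 0) cD) as Hcont.
  destruct (Req_dec (D 0) 0) as [|Hne]; auto. exfalso.
  destruct (Hcont (Rabs (D 0))) as [d [d0 Hd]]; [apply Rabs_pos_lt; auto|].
  (* [D] keeps the sign of [D 0] at [t = -d/2 sgn (D 0)], where [t * D t < 0]. *)
  set (t := if Rlt_dec 0 (D 0) then - (d / 2) else d / 2).
  assert (Ht : Rabs (D t - D 0) < Rabs (D 0)).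
  { apply Hd. unfold t. destruct (Rlt_dec 0 (D 0)); rewrite Rminus_0_r;
      [rewrite Rabs_Ropp|]; rewrite Rabs_right; lra. }
  specialize (H t). unfold t in *. destruct (Rlt_dec 0 (D 0)).
  - rewrite (Rabs_right (D 0)) in Ht by lra. apply Rabs_def2 in Ht. nra.
  - rewrite (Rabs_left (D 0)) in Ht by lra. apply Rabs_def2 in Ht. nra.
Qed.

Section Inverse.
Variable f : R -> R.
Hypothesis Hinc : forall x y, x < y -> f x < f y.
Hypothesis Hsur : forall y, exists x, f x = y.

Let f_le x y : x <= y -> f x <= f y.
Proof. intros [H|<-]; [left; auto | lra]. Qed.

Definition finv (y : R) : R := proj1_sig (constructive_indefinite_description _ (Hsur y)).

Lemma f_finv y : f (finv y) = y.
Proof. unfold finv. destruct (constructive_indefinite_description _ _). auto. Qed.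

Lemma finv_f x : finv (f x) = x.
Proof.
  pose proof (f_finv (f x)) as E.
  destruct (Rtotal_order (finv (f x)) x) as [h|[h|h]]; auto; apply Hinc in h; lra.
Qed.

Lemma finv_le y1 y2 : y1 <= y2 -> finv y1 <= finv y2.
Proof.
  intros H. destruct (Rle_dec (finv y1) (finv y2)) as [|Hlt]; auto.
  apply Rnot_le_lt, Hinc in Hlt. rewrite !f_finv in Hlt. lra.
Qed.

Lemma continuity_finv : continuity finv.
Proof.
  intros y. apply continuity_pt_eps_delta. intros eps He. set (x0 := finv y).
  assert (E0 : f x0 = y) by apply f_finv.
  assert (f x0 < f (x0 + eps)) by (apply Hinc; lra).
  assert (f (x0 - eps) < f x0) by (apply Hinc; lra).
  exists (Rmin (f (x0 + eps) - y) (y - f (x0 - eps))). split; [apply Rmin_glb_lt; lra|].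
  intros z Hz. apply Rabs_def2 in Hz. destruct Hz as [Hz1 Hz2].
  pose proof (Rmin_l (f (x0 + eps) - y) (y - f (x0 - eps))).
  pose proof (Rmin_r (f (x0 + eps) - y) (y - f (x0 - eps))).
  apply Rabs_def1.
  - destruct (Rlt_dec (finv z) (x0 + eps)) as [|Hge]; [fold x0; lra|].
    assert (f (x0 + eps) <= f (finv z)) by (apply f_le; lra). rewrite f_finv in H3. lra.
  - destruct (Rlt_dec (x0 - eps) (finv z)) as [|Hge]; [fold x0; lra|].
    assert (f (finv z) <= f (x0 - eps)) by (apply f_le; lra). rewrite f_finv in H3. lra.
Qed.

End Inverse.

Definition antideriv (g : R -> R) (y : R) : R := RInt g 0 y.

Section Antiderivative.
Variable g : R -> R.
Hypothesis cg : continuity g.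
Hypothesis mg : forall x y, x <= y -> g x <= g y.

Lemma ex_RInt_cont a b : ex_RInt g a b.
Proof.
  apply (@ex_RInt_continuous R_CompleteNormedModule). intros z _.
  apply continuity_pt_filterlim, cg.
Qed.

Lemma RInt_const_eq c a b : RInt (V := R_CompleteNormedModule) (fun _ => c) a b = c * (b - a).
Proof. rewrite RInt_const. simpl. unfold scal; simpl; unfold mult; simpl. ring. Qed.

Lemma RInt_monotone_bounds a b : a <= b -> g a * (b - a) <= RInt g a b <= g b * (b - a).
Proof.
  intros Hab. rewrite <- !RInt_const_eq.
  split; apply RInt_le; auto using ex_RInt_const, ex_RInt_cont; intros x [H1 H2]; apply mg; lra.
Qed.

Lemma antideriv_sub y Y : antideriv g y - antideriv g Y = RInt g Y y.
Proof.
  unfold antideriv. rewrite <- (RInt_Chasles g 0 Y y) by apply ex_RInt_cont.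
  simpl. unfold plus; simpl. ring.
Qed.

(* Tangent-line bounds: the antiderivative of a nondecreasing function is convex. *)
Lemma antideriv_sub_bounds y Y :
  g Y * (y - Y) <= antideriv g y - antideriv g Y <= g y * (y - Y).
Proof.
  rewrite antideriv_sub.
  destruct (Rle_dec Y y); [apply RInt_monotone_bounds; auto|].
  pose proof (RInt_monotone_bounds y Y ltac:(lra)).
  rewrite <- opp_RInt_swap by apply ex_RInt_cont. simpl. unfold opp; simpl. lra.
Qed.

Lemma continuity_antideriv : continuity (antideriv g).
Proof.
  intros y. apply continuity_pt_filterlim.
  apply (ex_derive_continuous (K := R_AbsRing) (V := R_NormedModule)).
  exists (g y). apply is_derive_RInt with (a := 0).
  - apply filter_forall. intros z. apply (RInt_correct (V := R_CompleteNormedModule)), ex_RInt_cont.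
  - apply continuity_pt_filterlim, cg.
Qed.

Lemma antideriv_linear_lower L : 0 <= L ->
  (exists yp, g yp = L) -> (exists ym, g ym = - L) ->
  exists C, forall y, L * Rabs y - C <= antideriv g y.
Proof.
  intros L0 [yp Hp] [ym Hm].
  exists (Rabs (antideriv g yp) + L * Rabs yp + Rabs (antideriv g ym) + L * Rabs ym).
  intros y. destruct (antideriv_sub_bounds y yp) as [S1 _].
  destruct (antideriv_sub_bounds y ym) as [S2 _]. rewrite Hp in S1. rewrite Hm in S2.
  pose proof (Rle_abs (antideriv g yp)). pose proof (Rle_abs (- antideriv g yp)).
  pose proof (Rle_abs (antideriv g ym)). pose proof (Rle_abs (- antideriv g ym)).
  pose proof (Rle_abs yp). pose proof (Rle_abs (- yp)).
  pose proof (Rle_abs ym). pose proof (Rle_abs (- ym)). rewrite !Rabs_Ropp in *.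
  unfold Rabs at 1. destruct (Rcase_abs y); nra.
Qed.

End Antiderivative.

Lemma continuity_const_fun (c : R) : continuity (fun _ => c).
Proof. apply continuity_const. intros ? ?; auto. Qed.

Lemma continuity_id_fun : continuity (fun t => t).
Proof. apply derivable_continuous, derivable_id. Qed.

Lemma continuity_nsum m (F : nat -> R -> R) :
  (forall i, (i < m)%nat -> continuity (F i)) -> continuity (fun t => nsum m (fun i => F i t)).
Proof.
  induction m; intros H; simpl; [apply continuity_const_fun|].
  apply continuity_plus; [apply IHm; intros|]; apply H; lia.
Qed.

Definition cont_coords (n : nat) (F : (nat -> R) -> R) : Prop :=
  forall x eps, 0 < eps -> exists d, 0 < d /\
    forall y, (forall i, (i < n)%nat -> Rabs (y i - x i) < d) -> Rabs (F y - F x) < eps.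

Section CoordContinuity.
Variable n : nat.

Lemma cont_coords_const c : cont_coords n (fun _ => c).
Proof.
  intros x eps He. exists 1. split; [lra|]. intros.
  replace (c - c) with 0 by ring. rewrite Rabs_R0; lra.
Qed.

Lemma cont_coords_proj i : (i < n)%nat -> cont_coords n (fun x => x i).
Proof. intros Hi x eps He. exists eps. split; auto. Qed.

Lemma cont_coords_ext F G : (forall x, F x = G x) -> cont_coords n G -> cont_coords n F.
Proof.
  intros H cG x eps He. destruct (cG x eps He) as [d [dp Hd]]. exists d. split; auto.
  intros y Hy. rewrite !H. auto.
Qed.

Lemma cont_coords_plus F G :
  cont_coords n F -> cont_coords n G -> cont_coords n (fun x => F x + G x).
Proof.
  intros cF cG x eps He.
  destruct (cF x (eps/2)) as [d1 [d1p H1]]; [lra|].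
  destruct (cG x (eps/2)) as [d2 [d2p H2]]; [lra|].
  exists (Rmin d1 d2). split; [apply Rmin_glb_lt; auto|]. intros y Hy.
  pose proof (H1 y (fun i Hi => Rlt_le_trans _ _ _ (Hy i Hi) (Rmin_l _ _))).
  pose proof (H2 y (fun i Hi => Rlt_le_trans _ _ _ (Hy i Hi) (Rmin_r _ _))).
  replace (F y + G y - (F x + G x)) with ((F y - F x) + (G y - G x)) by ring.
  eapply Rle_lt_trans; [apply Rabs_triang|]. lra.
Qed.

Lemma cont_coords_mult F G :
  cont_coords n F -> cont_coords n G -> cont_coords n (fun x => F x * G x).
Proof.
  intros cF cG x eps He.
  set (c := Rabs (F x) + Rabs (G x) + 1).
  assert (c0 : 1 <= c) by (unfold c; pose proof (Rabs_pos (F x)); pose proof (Rabs_pos (G x)); lra).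
  set (e := Rmin 1 (eps / c)).
  assert (e0 : 0 < e) by (apply Rmin_glb_lt; [lra|apply Rdiv_lt_0_compat; lra]).
  assert (ec : e * c <= eps).
  { apply Rle_trans with (eps / c * c); [apply Rmult_le_compat_r; [lra|apply Rmin_r]|].
    right. field. lra. }
  destruct (cF x e e0) as [d1 [d1p H1]]. destruct (cG x e e0) as [d2 [d2p H2]].
  exists (Rmin d1 d2). split; [apply Rmin_glb_lt; auto|]. intros y Hy.
  pose proof (H1 y (fun i Hi => Rlt_le_trans _ _ _ (Hy i Hi) (Rmin_l _ _))) as A1.
  pose proof (H2 y (fun i Hi => Rlt_le_trans _ _ _ (Hy i Hi) (Rmin_r _ _))) as A2.
  assert (e1 : e <= 1) by apply Rmin_l.
  replace (F y * G y - F x * G x)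
    with ((F y - F x) * (G y - G x) + F x * (G y - G x) + G x * (F y - F x)) by ring.
  eapply Rle_lt_trans; [apply Rabs_triang|].
  eapply Rle_lt_trans; [apply Rplus_le_compat_r, Rabs_triang|]. rewrite !Rabs_mult.
  pose proof (Rabs_pos (F y - F x)). pose proof (Rabs_pos (G y - G x)).
  pose proof (Rabs_pos (F x)). pose proof (Rabs_pos (G x)).
  unfold c in ec. nra.
Qed.

Lemma cont_coords_scal a F : cont_coords n F -> cont_coords n (fun x => a * F x).
Proof. intros. apply (cont_coords_mult (fun _ => a)); auto using cont_coords_const. Qed.

Lemma cont_coords_opp F : cont_coords n F -> cont_coords n (fun x => - F x).
Proof.
  intros cF. apply (cont_coords_ext _ (fun x => -1 * F x)); [intros; ring|].
  apply cont_coords_scal; auto.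
Qed.

Lemma cont_coords_minus F G :
  cont_coords n F -> cont_coords n G -> cont_coords n (fun x => F x - G x).
Proof.
  intros cF cG. apply (cont_coords_ext _ (fun x => F x + -1 * G x)); [intros; ring|].
  apply cont_coords_plus, cont_coords_scal; auto.
Qed.

Lemma cont_coords_comp g F :
  continuity g -> cont_coords n F -> cont_coords n (fun x => g (F x)).
Proof.
  intros cg cF x eps He.
  destruct (proj1 (continuity_pt_eps_delta g (F x)) (cg (F x)) eps He) as [d [dp H]].
  destruct (cF x d dp) as [d' [d'p H']]. exists d'. split; auto.
Qed.

Lemma cont_coords_nsum m F : (forall i, (i < m)%nat -> cont_coords n (F i)) ->
  cont_coords n (fun x => nsum m (fun i => F i x)).
Proof.
  induction m; intros H; simpl; [apply cont_coords_const|].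
  apply (cont_coords_plus (fun x => nsum m (fun i => F i x)) (F m));
    [apply IHm; intros|]; apply H; lia.
Qed.

Lemma cont_coords_sum_el m F : (forall j, (1 <= j <= m)%nat -> cont_coords n (F j)) ->
  cont_coords n (fun x => sum_el m (fun j => F j x)).
Proof.
  intros H. apply (cont_coords_ext _ (fun x => nsum m (fun i => F (S i) x))).
  - intros x. apply sum_el_nsum.
  - apply cont_coords_nsum. intros. apply H. lia.
Qed.

Lemma cont_coords_local F x y : cont_coords n F ->
  (forall i, (i < n)%nat -> y i = x i) -> F y = F x.
Proof.
  intros cF H. destruct (Req_dec (F y) (F x)) as [|Hne]; auto.
  assert (0 < Rabs (F y - F x)) by (apply Rabs_pos_lt; lra).
  destruct (cF x _ H0) as [d [d0 Hd]].
  assert (Rabs (F y - F x) < Rabs (F y - F x)); [|lra].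
  apply Hd. intros i Hi. rewrite H by auto. replace (x i - x i) with 0 by ring.
  rewrite Rabs_R0; lra.
Qed.

End CoordContinuity.

Module BoxMinimum.
Import mathcomp.boot.all_boot mathcomp.order.all_order mathcomp.algebra.all_algebra.
Import mathcomp.classical.all_classical mathcomp.reals.all_reals mathcomp.analysis.all_analysis.
Import mathcomp.reals_stdlib.Rstruct mathcomp.analysis_stdlib.Rstruct_topology.
Import Order.TTheory GRing.Theory Num.Theory.
Local Open Scope classical_set_scope.
Local Open Scope ring_scope.

Definition seq_of_row {n : nat} (v : 'rV[R]_n.+1) : nat -> R :=
  fun i => if (i < n)%N then v ord0 (inord i) else 0.

Lemma continuous_cont_coords_row n (F : (nat -> R) -> R) :
  cont_coords n F -> continuous (F \o @seq_of_row n).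
Proof.
move=> cF v B /= /nbhs_ballP [e /= e0 eB].
have e0' : (0 < e)%coqR by apply/RltP.
have [d [d0 Hd]] := cF (seq_of_row v) e e0'.
exists (fun i j => ball (v i j) d); first by move=> i j; apply: nbhsx_ballx; apply/RltP.
move=> w Hw; apply: eB.
rewrite /ball /= -RabsE. apply/RltP. rewrite Rabs_minus_sym. apply: Hd => i /ssrnat.ltP Hi.
rewrite /seq_of_row Hi. have := Hw ord0 (inord i). rewrite /ball /= -RabsE => /RltP.
by rewrite Rabs_minus_sym.
Qed.

Lemma cont_coords_box_min (n : nat) (F : (nat -> R) -> R) (M : R) :
  (0 <= M)%coqR -> cont_coords n F ->
  exists x, (forall i, (i < n)%coq_nat -> Rabs (x i) <= M)%coqR /\
     forall y, (forall i, (i < n)%coq_nat -> Rabs (y i) <= M)%coqR -> (F x <= F y)%coqR.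
Proof.
move=> M0 cF.
pose A := [set v : 'rV[R]_n.+1 | forall i, `[(-M)%R, M]%classic (v ord0 i)].
have cA : compact A.
  by apply: (@rV_compact _ _ (fun=> `[(-M)%R, M]%classic)) => _; exact: segment_compact.
have A0 : A !=set0.
  exists 0 => i /=; rewrite mxE in_itv /=.
  apply/andP; split; apply/RleP; rewrite -?RoppE -?R0E; lra.
have cG : {within A, continuous (F \o @seq_of_row n)}.
  by apply: continuous_subspaceT; apply: continuous_cont_coords_row.
have [v vA vmin] := compact_EVT_min A0 cA cG.
exists (seq_of_row v); split.
  move=> i /ssrnat.ltP Hi. rewrite /seq_of_row Hi.
  move: vA; rewrite inE => vA. have := vA (inord i).
  rewrite /= in_itv /= => /andP [/RleP h1 /RleP h2].
  apply: Rabs_le; rewrite -?RoppE in h1; lra.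
move=> y Hy.
pose w : 'rV[R]_n.+1 := \row_j (if (j < n)%N then y j else 0).
have wA : A w.
  move=> j /=; rewrite mxE in_itv /=. case: ifP => jn.
    have /Rabs_le_between [h1 h2] := Hy j (ssrnat.ltP jn).
    by apply/andP; split; apply/RleP; rewrite -?RoppE.
  apply/andP; split; apply/RleP; rewrite -?RoppE -?R0E; lra.
have /RleP := vmin w (mem_set wA).
rewrite /comp (cont_coords_local _ _ (seq_of_row w) y cF) //.
move=> i Hi; have Hi' : (i < n)%N by apply/ssrnat.ltP.
by rewrite /seq_of_row Hi' mxE inordK ?Hi' //; exact: ltnW.
Qed.

End BoxMinimum.

(** * Existence *)

Section FreeCoordinates.
Variables (per : bool) (J : nat) (bc : bool -> bctype).

(* [of_coords x] is the element of [V^h_∂] whose unconstrained nodal components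
   are read off [x] (components [2 i] and [2 i + 1] for node [i]); in the
   periodic case node [J] repeats node [0]. *)
Definition base_node (j : nat) : nat := if per && (j =? J)%nat then O else j.
Definition free_fst (j : nat) : bool :=
  negb (in_bd per J bc B0 j || in_bd per J bc Defs.B1 j || in_bd per J bc BD j).
Definition free_snd (j : nat) : bool := negb (in_bd per J bc B2 j || in_bd per J bc BD j).
Definition of_coords (x : nat -> R) (j : nat) : vec :=
  (if free_fst (base_node j) then x (2 * base_node j)%nat else 0,
   if free_snd (base_node j) then x (S (2 * base_node j)) else 0).
Definition to_coords (Y : nat -> vec) (i : nat) : R :=
  if Nat.even i then fst (Y (Nat.div2 i)) else snd (Y (Nat.div2 i)).
Definition ncoords : nat := (2 * S J)%nat.

Lemma in_bd_nonperiodic k j : in_bd per J bc k j = true -> per = false.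
Proof. unfold in_bd. destruct per; auto. Qed.

Lemma base_node_le j : (base_node j <= j)%nat.
Proof. unfold base_node. destruct (per && (j =? J))%nat; lia. Qed.

Lemma base_node_free i : (i < nfree per J)%nat -> base_node i = i.
Proof.
  unfold base_node, nfree. intros H. destruct per; simpl; auto.
  destruct (i =? J)%nat eqn:E; auto. apply Nat.eqb_eq in E. lia.
Qed.

Lemma of_coords_admissible x : (1 <= J)%nat -> inVVh_d per J bc (of_coords x).
Proof.
  intros HJ.
  assert (Hb : forall k j, in_bd per J bc k j = true -> base_node j = j).
  { intros k j Hj. unfold base_node. rewrite (in_bd_nonperiodic k j Hj). auto. }
  unfold inVVh_d, inVVh_d0, of_coords, free_fst, free_snd, vdot, e1, e2.
  split; [split|split; [|split]];
    try (intros j Hj; rewrite (Hb _ _ Hj), Hj, ?orb_true_r; simpl; ring).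
  - intros Hp. unfold base_node. rewrite Hp, Nat.eqb_refl. simpl.
    destruct J as [|J0]; [lia|]. reflexivity.
  - intros j Hj. rewrite (Hb _ _ Hj), Hj, !orb_true_r. auto.
Qed.

Lemma to_coords_even Y i : to_coords Y (2 * i)%nat = fst (Y i).
Proof. unfold to_coords. rewrite Nat.even_even, Nat.div2_double. auto. Qed.

Lemma to_coords_odd Y i : to_coords Y (S (2 * i))%nat = snd (Y i).
Proof.
  unfold to_coords. replace (S (2 * i)) with (2 * i + 1)%nat by lia.
  rewrite Nat.even_odd, Nat.div2_odd'. auto.
Qed.

Lemma of_coords_to_coords Y : inVVh_d per J bc Y ->
  forall j, (j <= J)%nat -> of_coords (to_coords Y) j = Y j.
Proof.
  intros [[HV H0] [H1 [H2 HD]]] j Hj. unfold of_coords. rewrite to_coords_even, to_coords_odd.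
  case_eq per; intros Hp.
  - assert (Hf : forall k, free_fst k = true /\ free_snd k = true)
      by (intros; unfold free_fst, free_snd, in_bd; rewrite Hp; auto).
    rewrite (proj1 (Hf _)), (proj2 (Hf _)). unfold base_node. rewrite Hp. simpl.
    destruct (j =? J)%nat eqn:E.
    + apply Nat.eqb_eq in E. subst j. rewrite HV by auto. destruct (Y O); auto.
    + destruct (Y j); auto.
  - unfold base_node. rewrite Hp. simpl. unfold free_fst, free_snd.
    destruct (in_bd per J bc BD j) eqn:ED; [rewrite !orb_true_r; simpl; rewrite (HD j ED); auto|].
    rewrite !orb_false_r.
    assert (F1 : in_bd per J bc B0 j || in_bd per J bc Defs.B1 j = true -> fst (Y j) = 0).
    { intros Ho. apply orb_true_iff in Ho.
      destruct Ho as [Ho|Ho]; [specialize (H0 j Ho)|specialize (H1 j Ho)];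
        unfold vdot, e1 in *; simpl in *; lra. }
    assert (F2 : in_bd per J bc B2 j = true -> snd (Y j) = 0).
    { intros Ho. specialize (H2 j Ho). unfold vdot, e2 in *; simpl in *; lra. }
    destruct (in_bd per J bc B0 j || in_bd per J bc Defs.B1 j), (in_bd per J bc B2 j);
      simpl; destruct (Y j) as [y1 y2] eqn:EY; simpl in *; f_equal;
      try (symmetry; apply F1; auto); try (symmetry; apply F2; auto); auto.
Qed.

Lemma of_coords_zero j : of_coords (fun _ => 0) j = (0, 0).
Proof. unfold of_coords. destruct (free_fst (base_node j)), (free_snd (base_node j)); auto. Qed.

Lemma to_coords_bound Y M :
  (forall j, (j <= J)%nat -> Rabs (fst (Y j)) <= M /\ Rabs (snd (Y j)) <= M) ->
  forall i, (i < ncoords)%nat -> Rabs (to_coords Y i) <= M.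
Proof.
  intros H i Hi. unfold ncoords in Hi.
  assert (Hd : (Nat.div2 i <= J)%nat).
  { pose proof (Nat.div2_odd i). destruct (Nat.odd i); simpl in *; lia. }
  unfold to_coords. destruct (Nat.even i); apply H; auto.
Qed.

Lemma cont_coords_of_coords_fst j :
  (j <= J)%nat -> cont_coords ncoords (fun x => fst (of_coords x j)).
Proof.
  intros Hj. unfold of_coords. simpl. pose proof (base_node_le j).
  destruct (free_fst (base_node j)); [apply cont_coords_proj; unfold ncoords; lia|].
  apply cont_coords_const.
Qed.

Lemma cont_coords_of_coords_snd j :
  (j <= J)%nat -> cont_coords ncoords (fun x => snd (of_coords x j)).
Proof.
  intros Hj. unfold of_coords. simpl. pose proof (base_node_le j).
  destruct (free_snd (base_node j)); [apply cont_coords_proj; unfold ncoords; lia|].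
  apply cont_coords_const.
Qed.

End FreeCoordinates.

Definition total_variation (J : nat) (Y : nat -> vec) : R :=
  sum_el J (fun j =>
    Rabs (fst (Y j) - fst (Y (j - 1)%nat)) + Rabs (snd (Y j) - snd (Y (j - 1)%nat))).

Lemma total_variation_nonneg J Y : 0 <= total_variation J Y.
Proof.
  apply sum_el_nonneg. intros.
  pose proof (Rabs_pos (fst (Y j) - fst (Y (j - 1)%nat))).
  pose proof (Rabs_pos (snd (Y j) - snd (Y (j - 1)%nat))). lra.
Qed.

Lemma total_variation_bound J Y j : (j <= J)%nat ->
  Rabs (fst (Y j) - fst (Y O)) <= total_variation J Y /\
  Rabs (snd (Y j) - snd (Y O)) <= total_variation J Y.
Proof.
  intros Hj. assert (Hprefix : total_variation j Y <= total_variation J Y).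
  { apply sum_el_le_prefix; auto. intros.
    pose proof (Rabs_pos (fst (Y j0) - fst (Y (j0 - 1)%nat))).
    pose proof (Rabs_pos (snd (Y j0) - snd (Y (j0 - 1)%nat))). lra. }
  enough (Rabs (fst (Y j) - fst (Y O)) <= total_variation j Y /\
          Rabs (snd (Y j) - snd (Y O)) <= total_variation j Y) by lra.
  clear Hj Hprefix. induction j as [|k [I1 I2]]; unfold total_variation in *; simpl.
  - rewrite !Rminus_diag, Rabs_R0. lra.
  - rewrite Nat.sub_0_r.
    pose proof (Rabs_pos (fst (Y (S k)) - fst (Y k))).
    pose proof (Rabs_pos (snd (Y (S k)) - snd (Y k))).
    pose proof (Rabs_triang (fst (Y (S k)) - fst (Y k)) (fst (Y k) - fst (Y O))) as T1.
    pose proof (Rabs_triang (snd (Y (S k)) - snd (Y k)) (snd (Y k) - snd (Y O))) as T2.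
    replace (fst (Y (S k)) - fst (Y k) + (fst (Y k) - fst (Y O)))
      with (fst (Y (S k)) - fst (Y O)) in T1 by ring.
    replace (snd (Y (S k)) - snd (Y k) + (snd (Y k) - snd (Y O)))
      with (snd (Y (S k)) - snd (Y O)) in T2 by ring.
    split; lra.
Qed.

Lemma total_variation_abs_bound J Y j : (j <= J)%nat ->
  Rabs (fst (Y j)) <= Rabs (fst (Y O)) + total_variation J Y /\
  Rabs (snd (Y j)) <= Rabs (snd (Y O)) + total_variation J Y.
Proof.
  intros Hj. destruct (total_variation_bound J Y j Hj).
  pose proof (Rabs_triang_inv (fst (Y j)) (fst (Y O))).
  pose proof (Rabs_triang_inv (snd (Y j)) (snd (Y O))). lra.
Qed.

(* Completing the square: [(p + q)^2 >= q^2/2 - p^2] and [q^2/2 >= 2aK|q| - 2K^2 a^2]. *)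
Lemma sq_linear_lower p q K a : 0 < a ->
  K * Rabs q - K ^ 2 * a - p ^ 2 / (2 * a) <= (p + q) ^ 2 / (2 * a).
Proof.
  intros Ha.
  assert ((p + q) ^ 2 >= q ^ 2 / 2 - p ^ 2) by (pose proof (pow2_ge_0 (2 * p + q)); nra).
  assert (q ^ 2 / 2 >= 2 * a * K * Rabs q - 2 * K ^ 2 * a ^ 2).
  { assert (Rabs q ^ 2 = q ^ 2) by (rewrite <- Rsqr_pow2, <- Rsqr_abs, Rsqr_pow2; auto).
    pose proof (pow2_ge_0 (Rabs q - 2 * a * K)). nra. }
  apply (Rmult_le_reg_r (2 * a)); [lra|].
  replace ((p + q) ^ 2 / (2 * a) * (2 * a)) with ((p + q) ^ 2) by (field; lra).
  replace ((K * Rabs q - K ^ 2 * a - p ^ 2 / (2 * a)) * (2 * a))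
    with (2 * a * K * Rabs q - 2 * K ^ 2 * a ^ 2 - p ^ 2) by (field; lra).
  lra.
Qed.

Lemma nsum_linear_lower m (G : nat -> R -> R) L :
  (forall i, (i < m)%nat -> exists C, forall y, L * Rabs y - C <= G i y) ->
  exists C, forall ys, L * nsum m (fun i => Rabs (ys i)) - C <= nsum m (fun i => G i (ys i)).
Proof.
  induction m; intros H; [exists 0; intros; simpl; lra|].
  destruct IHm as [C1 H1]; [intros; apply H; lia|].
  destruct (H m) as [C2 H2]; [lia|].
  exists (C1 + C2). intros ys. simpl. specialize (H1 ys). specialize (H2 (ys m)). lra.
Qed.

Lemma stiff_linear_lower J X K : (1 <= J)%nat ->
  (forall j, (1 <= j <= J)%nat -> 0 < lenrho J X j) ->
  exists C, forall Y, K * total_variation J Y - C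
    <= / 2 * stiff J X (fun j => vadd (X j) (Y j)) (fun j => vadd (X j) (Y j)).
Proof.
  intros HJ Hlen.
  exists (sum_el J (fun j => 2 * (K ^ 2 * (hh J * lenrho J X j))
     + ((fst (X j) - fst (X (j-1)%nat)) ^ 2 + (snd (X j) - snd (X (j-1)%nat)) ^ 2)
       / (2 * (hh J * lenrho J X j)))).
  intros Y. rewrite stiff_el. unfold total_variation.
  rewrite <- !sum_el_scal, <- sum_el_minus. apply sum_el_le. intros j Hj.
  pose proof (hh_pos J HJ). pose proof (Hlen j Hj).
  assert (Ha : 0 < hh J * lenrho J X j) by (apply Rmult_lt_0_compat; auto).
  set (p1 := fst (X j) - fst (X (j-1)%nat)). set (p2 := snd (X j) - snd (X (j-1)%nat)).
  set (q1 := fst (Y j) - fst (Y (j-1)%nat)). set (q2 := snd (Y j) - snd (Y (j-1)%nat)).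
  replace (/ 2 * (hh J * vdot (vdrho J (fun j => vadd (X j) (Y j)) j)
            (vscal (/ lenrho J X j) (vdrho J (fun j => vadd (X j) (Y j)) j))))
    with ((p1 + q1) ^ 2 / (2 * (hh J * lenrho J X j))
          + (p2 + q2) ^ 2 / (2 * (hh J * lenrho J X j))).
  2:{ unfold p1, p2, q1, q2, vdot, vdrho, vscal, vsub, vadd. simpl. field. lra. }
  pose proof (sq_linear_lower p1 q1 K _ Ha). pose proof (sq_linear_lower p2 q2 K _ Ha). lra.
Qed.

Lemma bdry_rhs_variation_bound per J bc rho Y : (forall p, Rabs (rho p) <= 1) ->
  bdry_rhs per J bc rho Y <= 2 * (Rabs (fst (Y O)) + Rabs (snd (Y O))) + 2 * total_variation J Y.
Proof.
  intros Hrho. pose proof (bdry_rhs_bound per J bc rho Y Hrho).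
  pose proof (Rle_abs (bdry_rhs per J bc rho Y)).
  destruct (total_variation_abs_bound J Y J (le_n J)). lra.
Qed.

Lemma velocity_inVVh per J X dX dt : inVVh per J X -> inVVh per J dX ->
  inVVh per J (fun j => vscal (/ dt) (vsub (vadd (X j) (dX j)) (X j))).
Proof. intros HX HdX Hp. rewrite (HX Hp), (HdX Hp). auto. Qed.

Lemma f_node_inVh per J bc X om f k : inVVh per J X -> inVVh per J om -> inVh per J k ->
  inVh per J (fun i => f (k i - Kop per J bc X om k i)).
Proof.
  intros HX Hom Hk Hp. rewrite (Hk Hp). unfold Kop, in_bd. rewrite Hp. simpl.
  rewrite (HX Hp), (Hom Hp). auto.
Qed.

Section Energy.
Variables (per : bool) (J : nat) (bc : bool -> bctype) (rho : bool -> R).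
Variables (X om : nat -> vec) (f : R -> R) (km : nat -> R) (dt theta : R).
Hypothesis HJ : (1 <= J)%nat.
Hypothesis Hinc : forall x y, x < y -> f x < f y.
Hypothesis Hsur : forall y, exists x, f x = y.
Hypothesis Hdt : 0 < dt.
Hypothesis Hlen : forall j, (1 <= j <= J)%nat -> 0 < lenrho J X j.

Local Notation mass := (lumped_mass per J X).
Local Notation normal := (lumped_normal per J X).

Lemma mass_pos i : (i < nfree per J)%nat -> 0 < mass i.
Proof. apply lumped_mass_pos; auto. Qed.

Lemma mass_dt_pos i : (i < nfree per J)%nat -> 0 < mass i * dt.
Proof. intros Hi. apply Rmult_lt_0_compat; auto using mass_pos. Qed.

(* [kappa_of i s] is the value [k] at node [i] with [k - K^m(k) = f^-1 s]:
   [K^m(k)] is [-k] on [∂_0 I] and does not depend on [k] elsewhere. *)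
Definition kappa_of (i : nat) (s : R) : R :=
  if in_bd per J bc B0 i then finv f Hsur s / 2
  else finv f Hsur s + vdot (om i) e1 / vdot (X i) e1.

(* The first equation of the scheme, tested with the hat function of node [i],
   says [f (k - K^m(k)) = y / (mass i * dt) + theta G^m] with [y = normal i . dX i]. *)
Definition kappa_response (i : nat) (y : R) : R :=
  kappa_of i (y / (mass i * dt) + theta * Gm per J bc f X om km).

Definition kappa_potential (i : nat) : R -> R := antideriv (kappa_response i).

Lemma continuity_kappa_response i : continuity (kappa_response i).
Proof.
  pose proof continuity_const_fun.
  assert (continuity (fun y => finv f Hsur (y / (mass i * dt) + theta * Gm per J bc f X om km))).
  { apply (continuity_comp (fun y => y / (mass i * dt) + theta * Gm per J bc f X om km)).
    - apply continuity_plus; auto. unfold Rdiv.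
      apply continuity_mult; auto using continuity_id_fun.
    - apply continuity_finv; auto. }
  unfold kappa_response, kappa_of. destruct (in_bd per J bc B0 i).
  - unfold Rdiv at 1. apply continuity_mult; auto.
  - apply continuity_plus; auto.
Qed.

Lemma kappa_response_le i : (i < nfree per J)%nat ->
  forall y1 y2, y1 <= y2 -> kappa_response i y1 <= kappa_response i y2.
Proof.
  intros Hi y1 y2 Hy. pose proof (mass_dt_pos i Hi). unfold kappa_response, kappa_of.
  assert (y1 / (mass i * dt) <= y2 / (mass i * dt))
    by (apply Rmult_le_compat_r; auto; left; apply Rinv_0_lt_compat; auto).
  pose proof (finv_le f Hinc Hsur (y1 / (mass i * dt) + theta * Gm per J bc f X om km)
                                  (y2 / (mass i * dt) + theta * Gm per J bc f X om km) ltac:(lra)).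
  destruct (in_bd per J bc B0 i); lra.
Qed.

Lemma kappa_response_onto i L : (i < nfree per J)%nat -> exists y, kappa_response i y = L.
Proof.
  intros Hi. pose proof (mass_pos i Hi).
  set (s := if in_bd per J bc B0 i then f (2 * L) else f (L - vdot (om i) e1 / vdot (X i) e1)).
  exists ((s - theta * Gm per J bc f X om km) * (mass i * dt)). unfold kappa_response.
  replace ((s - theta * Gm per J bc f X om km) * (mass i * dt) / (mass i * dt)
           + theta * Gm per J bc f X om km) with s by (field; lra).
  unfold kappa_of, s. destruct (in_bd per J bc B0 i); rewrite (finv_f f Hinc Hsur); lra.
Qed.

Lemma kappa_potential_linear_lower i L : (i < nfree per J)%nat -> 0 <= L ->
  exists C, forall y, L * Rabs y - C <= kappa_potential i y.
Proof.
  intros Hi L0.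
  apply (antideriv_linear_lower _ (continuity_kappa_response i) (kappa_response_le i Hi) L L0);
    apply kappa_response_onto; auto.
Qed.

(* The scheme is the Euler-Lagrange equation of this convex energy. *)
Definition energy (Y : nat -> vec) : R :=
  / 2 * stiff J X (fun j => vadd (X j) (Y j)) (fun j => vadd (X j) (Y j))
  - bdry_rhs per J bc rho Y
  + nsum (nfree per J) (fun i => kappa_potential i (vdot (normal i) (Y i))).

Lemma energy_ext Y Y' : (forall j, (j <= J)%nat -> Y j = Y' j) -> energy Y = energy Y'.
Proof.
  intros H. unfold energy. rewrite (bdry_rhs_ext per J bc rho Y Y' H).
  rewrite (stiff_ext J X HJ _ (fun j => vadd (X j) (Y' j)) _ (fun j => vadd (X j) (Y' j)))
    by (intros j Hj; rewrite H; auto).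
  rewrite (nsum_ext _ _ (fun i => kappa_potential i (vdot (normal i) (Y' i)))); auto.
  intros i Hi. rewrite H; [|apply (nfree_le per)]; auto.
Qed.

Ltac cont_coords_poly :=
  repeat (first [ apply cont_coords_const
                | apply cont_coords_of_coords_fst; lia | apply cont_coords_of_coords_snd; lia
                | apply cont_coords_plus | apply cont_coords_minus | apply cont_coords_opp
                | apply cont_coords_mult ]).

Lemma cont_coords_energy : cont_coords (ncoords J) (fun x => energy (of_coords per J bc x)).
Proof.
  unfold energy. apply cont_coords_plus; [apply cont_coords_minus|].
  - apply (cont_coords_ext _ _ (fun x => / 2 * sum_el J (fun j =>
        hh J * vdot (vdrho J (fun j => vadd (X j) (of_coords per J bc x j)) j)
          (vscal (/ lenrho J X j) (vdrho J (fun j => vadd (X j) (of_coords per J bc x j)) j)))));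
      [intros x; rewrite stiff_el; auto|].
    apply cont_coords_scal, cont_coords_sum_el. intros j Hj.
    unfold vdot, vdrho, vscal, vsub, vadd. cbn [fst snd]. cont_coords_poly.
  - unfold bdry_rhs. destruct per; [apply cont_coords_const|].
    destruct (bc false), (bc true); unfold vdot, e1, e2, bnode; cbn [fst snd]; cont_coords_poly.
  - apply cont_coords_nsum. intros i Hi. apply cont_coords_comp.
    + apply (continuity_antideriv _ (continuity_kappa_response i)).
    + pose proof (nfree_le per J i Hi). unfold vdot. cont_coords_poly.
Qed.

Hypothesis HB : assumpB per J X.
Hypothesis Hrho : forall p, Rabs (rho p) <= 1.

Lemma vdot_normal_lower Y i : (i <= J)%nat ->
  Rabs (vdot (normal i) (Y O))
  - (Rabs (fst (normal i)) + Rabs (snd (normal i))) * total_variation J Y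
  <= Rabs (vdot (normal i) (Y i)).
Proof.
  intros Hi. destruct (total_variation_bound J Y i Hi) as [B1 B2].
  set (n1 := fst (normal i)). set (n2 := snd (normal i)).
  set (w := n1 * (fst (Y i) - fst (Y O)) + n2 * (snd (Y i) - snd (Y O))).
  replace (vdot (normal i) (Y i)) with (vdot (normal i) (Y O) + w)
    by (unfold vdot, w, n1, n2; ring).
  assert (Rabs w <= (Rabs n1 + Rabs n2) * total_variation J Y).
  { unfold w. eapply Rle_trans; [apply Rabs_triang|]. rewrite !Rabs_mult.
    pose proof (Rabs_pos n1). pose proof (Rabs_pos n2). nra. }
  pose proof (Rabs_triang_inv (vdot (normal i) (Y O)) (- w)).
  rewrite Rabs_Ropp in H0.
  replace (vdot (normal i) (Y O) - - w) with (vdot (normal i) (Y O) + w) in H0 by ring.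
  lra.
Qed.

Lemma energy_coercive : exists C, forall Y,
  total_variation J Y + (Rabs (fst (Y O)) + Rabs (snd (Y O))) - C <= energy Y.
Proof.
  destruct (normal_seminorm_coercive per J X HJ HB) as [K [Kp HK]].
  set (L := 3 * K).
  destruct (nsum_linear_lower (nfree per J) kappa_potential L) as [Cpot Hpot].
  { intros i Hi. apply kappa_potential_linear_lower; auto. unfold L; lra. }
  set (gam := nsum (nfree per J) (fun i => Rabs (fst (normal i)) + Rabs (snd (normal i)))).
  assert (0 <= gam).
  { apply nsum_nonneg. intros. pose proof (Rabs_pos (fst (normal i))).
    pose proof (Rabs_pos (snd (normal i))). lra. }
  destruct (stiff_linear_lower J X (L * gam + 3) HJ Hlen) as [Cstiff Hstiff].
  exists (Cstiff + Cpot). intros Y. unfold energy.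
  specialize (Hstiff Y). specialize (Hpot (fun i => vdot (normal i) (Y i))). simpl in Hpot.
  pose proof (bdry_rhs_variation_bound per J bc rho Y Hrho).
  pose proof (total_variation_nonneg J Y). specialize (HK (Y O)).
  assert (Hnodes : normal_seminorm per J X (Y O) - gam * total_variation J Y
                   <= nsum (nfree per J) (fun i => Rabs (vdot (normal i) (Y i)))).
  { unfold normal_seminorm, gam. rewrite Rmult_comm, <- nsum_scal, <- nsum_minus. apply nsum_le.
    intros i Hi. rewrite Rmult_comm. apply vdot_normal_lower, (nfree_le per); auto. }
  assert (L * (normal_seminorm per J X (Y O) - gam * total_variation J Y)
          <= L * nsum (nfree per J) (fun i => Rabs (vdot (normal i) (Y i))))
    by (apply Rmult_le_compat_l; auto; unfold L; lra).
  unfold L in *. nra.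
Qed.

Lemma energy_sublevel_bounded : exists M, 0 <= M /\
  forall Y, energy Y <= energy (fun _ => (0, 0)) ->
  forall j, (j <= J)%nat -> Rabs (fst (Y j)) <= M /\ Rabs (snd (Y j)) <= M.
Proof.
  destruct energy_coercive as [C HC].
  exists (energy (fun _ => (0, 0)) + C). split.
  - specialize (HC (fun _ => (0, 0))). simpl in HC.
    pose proof (total_variation_nonneg J (fun _ => (0, 0))). rewrite Rabs_R0 in HC. lra.
  - intros Y HY j Hj. specialize (HC Y).
    destruct (total_variation_abs_bound J Y j Hj).
    pose proof (Rabs_pos (fst (Y O))). pose proof (Rabs_pos (snd (Y O))). split; lra.
Qed.

Lemma energy_minimizer : exists dX, inVVh_d per J bc dX /\
  forall Y, inVVh_d per J bc Y -> energy dX <= energy Y.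
Proof.
  destruct energy_sublevel_bounded as [M [M0 HM]].
  destruct (BoxMinimum.cont_coords_box_min (ncoords J) _ M M0 cont_coords_energy)
    as [x [Hx Hmin]].
  exists (of_coords per J bc x). split; [apply of_coords_admissible, HJ|]. intros Y HY.
  assert (E0 : energy (of_coords per J bc (fun _ => 0)) = energy (fun _ => (0, 0)))
    by (apply energy_ext; intros; apply of_coords_zero).
  assert (Hx0 : energy (of_coords per J bc x) <= energy (fun _ => (0, 0))).
  { rewrite <- E0. apply Hmin. intros. rewrite Rabs_R0. auto. }
  assert (EY : energy (of_coords per J bc (to_coords Y)) = energy Y)
    by (apply energy_ext; intros; apply of_coords_to_coords; auto).
  destruct (Rle_dec (energy (fun _ => (0, 0))) (energy Y)); [lra|].
  rewrite <- EY. apply Hmin, to_coords_bound. intros j Hj. apply HM; auto. lra.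
Qed.

Lemma inVVh_d_vline Y eta t : inVVh_d per J bc Y -> inVVh_d per J bc eta ->
  inVVh_d per J bc (vline Y eta t).
Proof.
  intros [[P1 A1] [B1 [C1 D1]]] [[P2 A2] [B2 [C2 D2]]].
  unfold inVVh_d, inVVh_d0, inVVh, vline, vadd, vscal, vdot, e1, e2 in *; simpl in *.
  split; [split|split; [|split]].
  - intros Hp. rewrite (P1 Hp), (P2 Hp). auto.
  - intros j Hj. specialize (A1 j Hj). specialize (A2 j Hj). simpl in *. nra.
  - intros j Hj. specialize (B1 j Hj). specialize (B2 j Hj). simpl in *. nra.
  - intros j Hj. specialize (C1 j Hj). specialize (C2 j Hj). simpl in *. nra.
  - intros j Hj. rewrite (D1 j Hj), (D2 j Hj). simpl. f_equal; ring.
Qed.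

Section EulerLagrange.
Variables dX eta : nat -> vec.

Definition first_variation (t : R) : R :=
  stiff J X (fun j => vadd (X j) (dX j)) eta - bdry_rhs per J bc rho eta
  + t * (/ 2 * stiff J X eta eta)
  + nsum (nfree per J) (fun i =>
      kappa_response i (vdot (normal i) (dX i) + t * vdot (normal i) (eta i))
      * vdot (normal i) (eta i)).

(* Convexity of the potentials: [Phi y - Phi Y <= phi y (y - Y)]. *)
Lemma energy_vline_sub t : energy (vline dX eta t) - energy dX <= t * first_variation t.
Proof.
  unfold energy, first_variation.
  rewrite (stiff_ext J X HJ _ (vline (fun j => vadd (X j) (dX j)) eta t)
                           _ (vline (fun j => vadd (X j) (dX j)) eta t))
    by (intros; unfold vline, vadd, vscal; simpl; split; f_equal; ring).
  rewrite stiff_vline, bdry_rhs_vline.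
  assert (Hpot : forall i, (i < nfree per J)%nat ->
    kappa_potential i (vdot (normal i) (vline dX eta t i))
    - kappa_potential i (vdot (normal i) (dX i))
    <= t * (kappa_response i (vdot (normal i) (dX i) + t * vdot (normal i) (eta i))
            * vdot (normal i) (eta i))).
  { intros i Hi. unfold vline.
    replace (vdot (normal i) (vadd (dX i) (vscal t (eta i))))
      with (vdot (normal i) (dX i) + t * vdot (normal i) (eta i))
      by (unfold vdot, vadd, vscal; simpl; ring).
    pose proof (antideriv_sub_bounds _ (continuity_kappa_response i) (kappa_response_le i Hi)
                  (vdot (normal i) (dX i) + t * vdot (normal i) (eta i)) (vdot (normal i) (dX i))).
    unfold kappa_potential. nra. }
  pose proof (nsum_le _ _ _ Hpot). rewrite nsum_minus, nsum_scal in H. nra.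
Qed.

Lemma continuity_first_variation : continuity first_variation.
Proof.
  pose proof continuity_const_fun. pose proof continuity_id_fun.
  unfold first_variation. repeat apply continuity_plus; auto.
  - apply continuity_mult; auto.
  - apply continuity_nsum. intros i Hi. apply continuity_mult; auto.
    apply (continuity_comp (fun t => vdot (normal i) (dX i) + t * vdot (normal i) (eta i))).
    + apply continuity_plus, continuity_mult; auto.
    + apply continuity_kappa_response.
Qed.

Lemma energy_euler_lagrange : inVVh_d per J bc dX -> inVVh_d per J bc eta ->
  (forall Y, inVVh_d per J bc Y -> energy dX <= energy Y) -> first_variation 0 = 0.
Proof.
  intros HdX Heta Hmin. apply continuity_pt_sign_eq0; [apply continuity_first_variation|].
  intros t. pose proof (energy_vline_sub t).
  pose proof (Hmin _ (inVVh_d_vline dX eta t HdX Heta)). lra.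
Qed.

End EulerLagrange.

Hypothesis HXp : inVVh per J X.
Hypothesis Homp : inVVh per J om.

Lemma exists_solution : exists dX k, is_solution per J bc rho None None f theta X om km dt dX k.
Proof.
  destruct energy_minimizer as [dX [HdX Hmin]].
  set (k := fun j => let i := base_node per J j in kappa_response i (vdot (normal i) (dX i))).
  assert (Hk : inVh per J k).
  { intros Hp. unfold k, base_node. rewrite Hp, Nat.eqb_refl.
    rewrite (proj2 (Nat.eqb_neq 0 J)) by lia. reflexivity. }
  assert (Hnode : forall i, (i < nfree per J)%nat -> k i - Kop per J bc X om k i
     = finv f Hsur (vdot (normal i) (dX i) / (mass i * dt) + theta * Gm per J bc f X om km)).
  { intros i Hi. unfold k, Kop. rewrite base_node_free by auto.
    unfold kappa_response, kappa_of. destruct (in_bd per J bc B0 i); [field|ring]. }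
  exists dX, k. split; [auto|split; [auto|split; [|split]]].
  - intros j Hj. split; exact I.
  - intros chi Hchi. destruct HdX as [[HdXp _] _].
    rewrite (lump_velocity_nodal per), (lump_p1_nodal per), (lump_mass_nodal per)
      by auto using velocity_inVVh, f_node_inVh.
    rewrite <- nsum_scal, <- nsum_minus. apply nsum_ext. intros i Hi.
    rewrite Hnode, (f_finv f Hsur) by auto. pose proof (mass_pos i Hi).
    unfold vdot, vscal, vsub, vadd. cbn [fst snd]. field. lra.
  - intros eta Heta.
    rewrite (lump_curvature_nodal per) by (auto; destruct Heta as [[H _] _]; auto).
    pose proof (energy_euler_lagrange dX eta HdX Heta Hmin) as HEL.
    unfold first_variation in HEL. rewrite Rmult_0_l in HEL.
    rewrite (nsum_ext _ (fun i => k i * vdot (normal i) (eta i))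
        (fun i => kappa_response i (vdot (normal i) (dX i) + 0 * vdot (normal i) (eta i))
                  * vdot (normal i) (eta i))).
    + unfold stiff in HEL. lra.
    + intros i Hi. unfold k. rewrite base_node_free, Rmult_0_l, Rplus_0_r by auto. auto.
Qed.

End Energy.

(** * Uniqueness *)

Lemma inVVh_d_sub per J bc Y1 Y2 : inVVh_d per J bc Y1 -> inVVh_d per J bc Y2 ->
  inVVh_d per J bc (fun j => vsub (Y1 j) (Y2 j)).
Proof.
  intros [[P1 A1] [B1 [C1 D1]]] [[P2 A2] [B2 [C2 D2]]].
  unfold inVVh_d, inVVh_d0, inVVh, vsub, vdot, e1, e2 in *; simpl in *.
  split; [split|split; [|split]].
  - intros Hp. rewrite (P1 Hp), (P2 Hp). auto.
  - intros j Hj. specialize (A1 j Hj). specialize (A2 j Hj). lra.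
  - intros j Hj. specialize (B1 j Hj). specialize (B2 j Hj). lra.
  - intros j Hj. specialize (C1 j Hj). specialize (C2 j Hj). lra.
  - intros j Hj. rewrite (D1 j Hj), (D2 j Hj). simpl. f_equal; ring.
Qed.

Section Uniqueness.
Variables (per : bool) (J : nat) (bc : bool -> bctype) (rho : bool -> R) (a b : option R).
Variables (X om : nat -> vec) (f : R -> R) (km : nat -> R) (dt theta : R).
Hypothesis HJ : (1 <= J)%nat.
Hypothesis Hinc : forall x y, inab a b x -> inab a b y -> x < y -> f x < f y.
Hypothesis Hlen : forall j, (1 <= j <= J)%nat -> 0 < lenrho J X j.
Hypothesis HB : assumpB per J X.
Hypothesis Hdt : 0 < dt.
Hypothesis HXp : inVVh per J X.
Hypothesis Homp : inVVh per J om.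

Local Notation mass := (lumped_mass per J X).
Local Notation normal := (lumped_normal per J X).
Local Notation solution := (is_solution per J bc rho a b f theta X om km dt).

Definition f_node (k : nat -> R) (i : nat) : R := f (k i - Kop per J bc X om k i).

Lemma first_equation_nodal dX k : solution dX k ->
  forall chi, inVh per J chi ->
  nsum (nfree per J) (fun i => chi i * vdot (normal i) (dX i)) / dt
  = nsum (nfree per J) (fun i => mass i * (chi i * f_node k i))
    - theta * Gm per J bc f X om km * nsum (nfree per J) (fun i => mass i * chi i).
Proof.
  intros [[[HdXp _] _] [Hk [_ [E1 _]]]] chi Hchi. specialize (E1 chi Hchi).
  rewrite (lump_velocity_nodal per), (lump_p1_nodal per J X HJ (f_node k)),
    (lump_mass_nodal per) in E1 by (unfold f_node; auto using velocity_inVVh, f_node_inVh).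
  rewrite <- E1. unfold Rdiv. rewrite Rmult_comm, <- nsum_scal. apply nsum_ext. intros i _.
  unfold vdot, vscal, vsub, vadd. cbn [fst snd]. ring.
Qed.

Lemma second_equation_nodal dX k : solution dX k ->
  forall eta, inVVh_d per J bc eta ->
  nsum (nfree per J) (fun i => k i * vdot (normal i) (eta i))
  + stiff J X (fun j => vadd (X j) (dX j)) eta = bdry_rhs per J bc rho eta.
Proof.
  intros [HdX [Hk [_ [_ E2]]]] eta Heta. specialize (E2 eta Heta).
  rewrite (lump_curvature_nodal per) in E2 by (auto; destruct Heta as [[H _] _]; auto).
  exact E2.
Qed.

(* [k - K^m(k)] is [2 k] on [∂_0 I] and [k] plus a constant elsewhere, so it is
   strictly increasing in [k i]. *)
Lemma f_node_monotone k1 k2 i :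
  inab a b (k1 i - Kop per J bc X om k1 i) -> inab a b (k2 i - Kop per J bc X om k2 i) ->
  0 <= (k1 i - k2 i) * (f_node k1 i - f_node k2 i) /\
  ((k1 i - k2 i) * (f_node k1 i - f_node k2 i) = 0 -> k1 i = k2 i).
Proof.
  intros H1 H2. unfold f_node in *.
  assert (Hc : exists c, 0 < c /\
    (k1 i - Kop per J bc X om k1 i) - (k2 i - Kop per J bc X om k2 i) = c * (k1 i - k2 i)).
  { unfold Kop. destruct (in_bd per J bc B0 i); [exists 2|exists 1]; split; (lra || ring). }
  destruct Hc as [c [c0 Hc]].
  set (u1 := k1 i - Kop per J bc X om k1 i) in *. set (u2 := k2 i - Kop per J bc X om k2 i) in *.
  destruct (Rtotal_order (k1 i) (k2 i)) as [Hl|[He|Hg]].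
  - assert (u1 < u2) by nra. assert (f u1 < f u2) by (apply Hinc; auto). split; intros; nra.
  - rewrite He. split; [lra|auto].
  - assert (u2 < u1) by nra. assert (f u2 < f u1) by (apply Hinc; auto). split; intros; nra.
Qed.

Section TwoSolutions.
Variables (dX1 dX2 : nat -> vec) (k1 k2 : nat -> R).
Hypothesis S1 : solution dX1 k1.
Hypothesis S2 : solution dX2 k2.

Let del j := vsub (dX1 j) (dX2 j).
Let chi j := k1 j - k2 j.

Lemma del_admissible : inVVh_d per J bc del.
Proof. apply inVVh_d_sub; [apply S1 | apply S2]. Qed.

Lemma chi_inVh : inVh per J chi.
Proof. intros Hp. unfold chi. rewrite (proj1 (proj2 S1) Hp), (proj1 (proj2 S2) Hp). auto. Qed.

(* Test the difference of the first equations with [chi] and of the second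
   ones with [del]: the curvature terms cancel. *)
Lemma difference_energy_identity :
  dt * nsum (nfree per J) (fun i => mass i * (chi i * (f_node k1 i - f_node k2 i)))
  + stiff J X del del = 0.
Proof.
  pose proof (first_equation_nodal dX1 k1 S1 chi chi_inVh) as Q1.
  pose proof (first_equation_nodal dX2 k2 S2 chi chi_inVh) as Q2.
  pose proof (second_equation_nodal dX1 k1 S1 del del_admissible) as R1.
  pose proof (second_equation_nodal dX2 k2 S2 del del_admissible) as R2.
  assert (Hstiff : stiff J X (fun j => vadd (X j) (dX1 j)) del
                   - stiff J X (fun j => vadd (X j) (dX2 j)) del = stiff J X del del).
  { rewrite stiff_sub. apply stiff_ext; auto. intros j _. split; auto.
    unfold del, vsub, vadd. simpl. f_equal; ring. }
  set (A := nsum (nfree per J) (fun i => chi i * vdot (normal i) (del i))).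
  assert (HA1 : A = nsum (nfree per J) (fun i => chi i * vdot (normal i) (dX1 i))
                  - nsum (nfree per J) (fun i => chi i * vdot (normal i) (dX2 i))).
  { unfold A. rewrite <- nsum_minus. apply nsum_ext. intros. unfold del, vdot, vsub. simpl. ring. }
  assert (HA2 : A = nsum (nfree per J) (fun i => k1 i * vdot (normal i) (del i))
                  - nsum (nfree per J) (fun i => k2 i * vdot (normal i) (del i))).
  { unfold A. rewrite <- nsum_minus. apply nsum_ext. intros. unfold chi. ring. }
  assert (HF : nsum (nfree per J) (fun i => mass i * (chi i * (f_node k1 i - f_node k2 i)))
               = A / dt).
  { rewrite HA1. unfold Rdiv. rewrite Rmult_minus_distr_r.
    fold (Rdiv (nsum (nfree per J) (fun i => chi i * vdot (normal i) (dX1 i))) dt).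
    fold (Rdiv (nsum (nfree per J) (fun i => chi i * vdot (normal i) (dX2 i))) dt).
    rewrite Q1, Q2.
    replace (nsum (nfree per J) (fun i => mass i * (chi i * (f_node k1 i - f_node k2 i))))
      with (nsum (nfree per J) (fun i => mass i * (chi i * f_node k1 i))
            - nsum (nfree per J) (fun i => mass i * (chi i * f_node k2 i))); [ring|].
    rewrite <- nsum_minus. apply nsum_ext. intros. ring. }
  rewrite HF. field_simplify; [|lra]. lra.
Qed.

Lemma chi_f_node_monotone i : (i <= J)%nat ->
  0 <= chi i * (f_node k1 i - f_node k2 i) /\
  (chi i * (f_node k1 i - f_node k2 i) = 0 -> k1 i = k2 i).
Proof.
  intros Hi. destruct S1 as [_ [_ [H1 _]]]. destruct S2 as [_ [_ [H2 _]]].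
  apply f_node_monotone; auto.
Qed.

Lemma difference_terms_nonneg : forall i, (i < nfree per J)%nat ->
  0 <= mass i * (chi i * (f_node k1 i - f_node k2 i)).
Proof.
  intros i Hi. pose proof (lumped_mass_pos per J X HJ Hlen i Hi).
  destruct (chi_f_node_monotone i (nfree_le per J i Hi)). apply Rmult_le_pos; lra.
Qed.

Lemma difference_terms_vanish :
  nsum (nfree per J) (fun i => mass i * (chi i * (f_node k1 i - f_node k2 i))) = 0 /\
  stiff J X del del = 0.
Proof.
  pose proof difference_energy_identity. pose proof (stiff_self_nonneg J X HJ Hlen del).
  pose proof (nsum_nonneg _ _ difference_terms_nonneg). split; nra.
Qed.

Lemma solutions_same_kappa : forall j, (j <= J)%nat -> k1 j = k2 j.
Proof.
  assert (Hfree : forall i, (i < nfree per J)%nat -> k1 i = k2 i).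
  { intros i Hi. pose proof (lumped_mass_pos per J X HJ Hlen i Hi).
    pose proof (nsum_eq0_nonneg _ _ difference_terms_nonneg (proj1 difference_terms_vanish) i Hi)
      as Zi.
    apply (chi_f_node_monotone i (nfree_le per J i Hi)).
    apply Rmult_integral in Zi. destruct Zi; [lra|auto]. }
  intros j Hj. destruct (Nat.lt_ge_cases j (nfree per J)) as [|Hge]; auto.
  unfold nfree in Hge. case_eq per; intros Hp; rewrite Hp in Hge; [|lia]. replace j with J by lia.
  rewrite (proj1 (proj2 S1) Hp), (proj1 (proj2 S2) Hp). apply Hfree. unfold nfree. rewrite Hp. lia.
Qed.

Lemma solutions_same_dX : forall j, (j <= J)%nat -> dX1 j = dX2 j.
Proof.
  pose proof (stiff_self_eq0 J X HJ Hlen del (proj2 difference_terms_vanish)) as Hconst.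
  assert (Hdel0 : del O = (0, 0)).
  { apply (Bvec_orthogonal_eq0 per J X HB). intros c Hc.
    rewrite (vdot_Bvec_nodal per) by auto.
    pose proof (first_equation_nodal dX1 k1 S1 c Hc) as Q1.
    pose proof (first_equation_nodal dX2 k2 S2 c Hc) as Q2.
    assert (Hf : nsum (nfree per J) (fun i => mass i * (c i * f_node k1 i))
               = nsum (nfree per J) (fun i => mass i * (c i * f_node k2 i))).
    { apply nsum_ext. intros i Hi. unfold f_node, Kop.
      rewrite solutions_same_kappa by (apply (nfree_le per); auto). auto. }
    transitivity (dt * (nsum (nfree per J) (fun i => c i * vdot (normal i) (dX1 i)) / dt
                        - nsum (nfree per J) (fun i => c i * vdot (normal i) (dX2 i)) / dt)).
    - field_simplify; [|lra]. rewrite <- nsum_minus. apply nsum_ext. intros i Hi.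
      rewrite <- (Hconst i) by (apply (nfree_le per); auto).
      unfold del, vdot, vsub. simpl. ring.
    - rewrite Q1, Q2, Hf. ring. }
  intros j Hj. pose proof (Hconst j Hj) as Dj. rewrite Hdel0 in Dj. unfold del, vsub in Dj.
  destruct (dX1 j) as [p1 p2], (dX2 j) as [q1 q2]. simpl in Dj. inversion Dj. f_equal; lra.
Qed.

End TwoSolutions.

End Uniqueness.

Theorem theoremB1
  (a b : option R) (f : R -> R)
  (Hab : inab a b 0)
  (Hcont : forall x, inab a b x -> continuity_pt f x)
  (Hincr : forall x y, inab a b x -> inab a b y -> x < y -> f x < f y)
  (Hsurj : forall y, exists x, inab a b x /\ f x = y)
  (per : bool) (J : nat) (HJ : (3 <= J)%nat)
  (bc : bool -> bctype) (rho : bool -> R) (Hrho : forall p, Rabs (rho p) <= 1)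
  (X om : nat -> vec) (km : nat -> R) (dt theta : R)
  (HX : inVVh_d0 per J bc X) (HA : assumpA per J bc X) (HB : assumpB per J X)
  (Hom : omega_spec per J X om)
  (Hdt : 0 < dt)
  (Htheta : theta = 0 \/ theta = 1)
  (Hkm : inVh per J km)
  (Hkmab : theta = 1 -> forall j, (j <= J)%nat -> inab a b (km j - Kop per J bc X om km j)) :
  (a = None -> b = None ->
     exists dX k, is_solution per J bc rho a b f theta X om km dt dX k) /\
  (forall dX1 k1 dX2 k2,
     is_solution per J bc rho a b f theta X om km dt dX1 k1 ->
     is_solution per J bc rho a b f theta X om km dt dX2 k2 ->
     forall j, (j <= J)%nat -> dX1 j = dX2 j /\ k1 j = k2 j).
Proof.
  (* [f] is continuous anyway, being increasing and onto; [G^m], [omega^m] and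
     [X^m . e1] enter the scheme only as fixed data. *)
  assert (HJ1 : (1 <= J)%nat) by lia.
  destruct HA as [Hlen _]. destruct HX as [HXp _]. destruct Hom as [Homp _].
  split.
  - intros -> ->.
    assert (Hinc : forall x y, x < y -> f x < f y) by (intros x y; apply Hincr; exact (conj I I)).
    assert (Hsur : forall y, exists x, f x = y)
      by (intros y; destruct (Hsurj y) as [x [_ Hx]]; eauto).
    exact (exists_solution per J bc rho X om f km dt theta HJ1 Hinc Hsur Hdt Hlen HB Hrho HXp Homp).
  - intros dX1 k1 dX2 k2 S1 S2 j Hj. split.
    + exact (solutions_same_dX per J bc rho a b X om f km dt theta HJ1 Hincr Hlen HB Hdt HXp Homp
               dX1 dX2 k1 k2 S1 S2 j Hj).
    + exact (solutions_same_kappa per J bc rho a b X om f km dt theta HJ1 Hincr Hlen Hdt HXp Homp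
               dX1 dX2 k1 k2 S1 S2 j Hj).
Qed.
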